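(* In the setting described in the context, with all standing assumptions in force, for every $i\in\{1,\dots,N\}$: $$\lim_{t\to\infty}\Big\|\mathbf y_{(i,:)}^t-\frac1N\sum_{j=1}^N\nabla f_j(\mathbf x_{(j,:)}^t)\Big\|=0\qquad\text{and}\qquad \sum_{t=0}^\infty\gamma^t\Big\|\mathbf y_{(i,:)}^t-\frac1N\sum_{j=1}^N\nabla f_j(\mathbf x_{(j,:)}^t)\Big\|<\infty .$$
   Context: Problem. Let $N,B,d\ge1$. A vector $\mathbf x\in\mathbb R^{dB}$ is partitioned into blocks $\mathbf x=(\mathbf x_1,\dots,\mathbf x_B)$ with $\mathbf x_\ell\in\mathbb R^d$, and $\nabla_\ell$ denotes the partial gradient with respect to block $\ell$. Problem (P) is $$\min_{\mathbf x}\ U(\mathbf x)=\sum_{i=1}^Nf_i(\mathbf x)+\sum_{\ell=1}^B r_\ell(\mathbf x_\ell)\quad\text{s.t. }\mathbf x_\ell\in\mathcal K_\ell,\ \ell=1,\dots,B,$$ with $\mathcal K=\mathcal K_1\times\dots\times\mathcal K_B$. Problem assumptions: - each $\mathcal K_\ell\subseteq\mathbb R^d$ is nonempty, closed and convex; - each $f_i:\mathbb R^{dB}\to\mathbb R$ is $C^1$ on an open set containing $\mathcal K$, and $\nabla f_i$ is $L_i$-Lipschitz continuous and bounded on $\mathcal K$; - each $r_\ell:\mathbb R^d\to\mathbb R$ is convex with bounded subgradients on $\mathcal K_\ell$; - $U$ is coercive on $\mathcal K$. Network. $\mathcal G=(\{1,\dots,N\},\mathcal E)$ is a fixed, strongly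 connected digraph containing all self-loops. The in-neighbor set of $i$ is $\mathcal N_i=\{j:(j,i)\in\mathcal E\}$. Block selection. At each iteration $t\ge0$, agent $i$ picks $\ell_i^t\in\{1,\dots,B\}$. For each $i$ there is a finite $T_i>0$ with $\bigcup_{\tau=0}^{T_i-1}\{\ell_i^{t+\tau}\}=\{1,\dots,B\}$ for all $t\ge0$. Define $\mathcal N_{i,\ell}^t=\{j\in\mathcal N_i:\ell_j^t=\ell\}\cup\{i\}$ and $\mathcal E_\ell^t=\{(j,i)\in\mathcal E:j\in\mathcal N_{i,\ell}^t\}$. Weights. For each $\ell$ and $t$, $A_\ell^t=[a_{ij\ell}^t]$ satisfies $a_{ij\ell}^t>\kappa$ if $(j,i)\in\mathcal E_\ell^t$, $a_{ij\ell}^t=0$ otherwise (for a fixed $\kappa>0$), and $\mathbf 1^\top A_\ell^t=\mathbf 1^\top$. Surrogates. For each $i,\ell$, $\tilde f_{i,\ell}:\mathcal K_\ell\times\mathcal K\to\mathbb R$ satisfies: - $\tilde f_{i,\ell}(\cdot;\mathbf x)$ is $C^1$ and $\tau_i$-strongly convex on $\mathcal K_\ell$ uniformly in $\mathbf x\in\mathcal K$, with $\tau_i>0$; - $\nabla\tilde f_{i,\ell}(\mathbf x_\ell;\mathbf x)=\nabla_\ell f_i(\mathbf x)$ for all $\mathbf x\in\mathcal K$, where $\nabla\tilde f_{i,\ell}$ is the gradient in the first argument and $\mathbf x_\ell$ is the $\ell$-th block of $\mathbf x$; - $\nabla\tilde f_{i,\ell}(\mathbf z;\cdot)$ is Lipschitz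 continuous on $\mathcal K$ uniformly in $\mathbf z\in\mathcal K_\ell$. For $\mathbf w\in\mathcal K$ and $\mathbf g\in\mathbb R^d$ let $$\hat f_{i,\ell}(\mathbf z;\mathbf w,\mathbf g)=\tilde f_{i,\ell}(\mathbf z;\mathbf w)+(N\mathbf g-\nabla_\ell f_i(\mathbf w))^\top(\mathbf z-\mathbf w_\ell).$$ Step sizes. $0<\gamma^t\le1$, $\gamma^{t+1}\le\gamma^t$, $\sum_t\gamma^t=\infty$, $\sum_t(\gamma^t)^2<\infty$. Algorithm. Agent $i$ holds $\mathbf x_{(i,:)}^t=(\mathbf x_{(i,\ell)}^t)_\ell$, $\mathbf y_{(i,:)}^t=(\mathbf y_{(i,\ell)}^t)_\ell$ in $\mathbb R^{dB}$ and scalars $\phi_{(i,\ell)}^t$. Initialization: $\mathbf x_{(i,:)}^0\in\mathcal K$ arbitrary, $\mathbf y_{(i,:)}^0=\nabla f_i(\mathbf x_{(i,:)}^0)$, $\phi_{(i,\ell)}^0=1$. At iteration $t$, each agent $i$: - computes $\tilde{\mathbf x}_{(i,\ell_i^t)}^t=\arg\min_{\mathbf z\in\mathcal K_{\ell_i^t}}\hat f_{i,\ell_i^t}(\mathbf z;\mathbf x_{(i,:)}^t,\mathbf y_{(i,\ell_i^t)}^t)+r_{\ell_i^t}(\mathbf z)$; - sets $\Delta\mathbf x_{(i,\ell)}^t=\tilde{\mathbf x}_{(i,\ell)}^t-\mathbf x_{(i,\ell)}^t$ if $\ell=\ell_i^t$ and $\Delta\mathbf x_{(i,\ell)}^t=\mathbf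 0$ otherwise; - for every $\ell$ updates $$\phi_{(i,\ell)}^{t+1}=\sum_{j\in\mathcal N_{i,\ell}^t}a_{ij\ell}^t\phi_{(j,\ell)}^t,\qquad \mathbf x_{(i,\ell)}^{t+1}=\sum_{j\in\mathcal N_{i,\ell}^t}\frac{a_{ij\ell}^t\phi_{(j,\ell)}^t}{\phi_{(i,\ell)}^{t+1}}\big(\mathbf x_{(j,\ell)}^t+\gamma^t\Delta\mathbf x_{(j,\ell)}^t\big),$$ $$\mathbf y_{(i,\ell)}^{t+1}=\sum_{j\in\mathcal N_{i,\ell}^t}\frac{a_{ij\ell}^t}{\phi_{(i,\ell)}^{t+1}}\Big(\phi_{(j,\ell)}^t\mathbf y_{(j,\ell)}^t+\nabla_\ell f_j(\mathbf x_{(j,:)}^{t+1})-\nabla_\ell f_j(\mathbf x_{(j,:)}^t)\Big).$$ *)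

From Stdlib Require Import Reals.
Open Scope R_scope.

(* Conventions: agents are 0..N-1, blocks are 0..B-1, coordinates 0..d-1.
   A vector of R^d is a function nat -> R (only coordinates k < d matter);
   a vector of R^{dB} is a function nat -> nat -> R, x l k = k-th coordinate
   of block l (only l < B, k < d matter). All metric notions below use the
   Euclidean (semi)norm over the meaningful coordinates. *)

Definition vecd := nat -> R.
Definition vecx := nat -> nat -> R.

Fixpoint fsum (n : nat) (f : nat -> R) : R :=
  match n with
  | O => 0
  | S m => fsum m f + f m
  end.

Definition ipd (d : nat) (u v : vecd) : R := fsum d (fun k => u k * v k).
Definition normd (d : nat) (u : vecd) : R := sqrt (ipd d u u).
Definition subd (u v : vecd) : vecd := fun k => u k - v k.
Definition combd (th : R) (u v : vecd) : vecd := fun k => th * u k + (1 - th) * v k.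

Definition ipx (B d : nat) (x y : vecx) : R :=
  fsum B (fun l => fsum d (fun k => x l k * y l k)).
Definition normx (B d : nat) (x : vecx) : R := sqrt (ipx B d x x).
Definition subx (x y : vecx) : vecx := fun l k => x l k - y l k.

Definition inK (B : nat) (K : nat -> vecd -> Prop) (x : vecx) : Prop :=
  forall l, (l < B)%nat -> K l (x l).

Definition closedd (d : nat) (S : vecd -> Prop) : Prop :=
  forall (u : nat -> vecd) (z : vecd), (forall n, S (u n)) ->
    Un_cv (fun n => normd d (subd (u n) z)) 0 -> S z.

Definition convexd (S : vecd -> Prop) : Prop :=
  forall z w th, S z -> S w -> 0 <= th <= 1 -> S (combd th z w).

Definition openx (B d : nat) (O : vecx -> Prop) : Prop :=
  forall x, O x -> exists delta, delta > 0 /\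
    forall y, normx B d (subx y x) < delta -> O y.

Definition has_gradx (B d : nat) (f : vecx -> R) (g : vecx) (x : vecx) : Prop :=
  forall eps, eps > 0 -> exists delta, delta > 0 /\
    forall y, normx B d (subx y x) < delta ->
      Rabs (f y - f x - ipx B d g (subx y x)) <= eps * normx B d (subx y x).

Definition contx_at (B d : nat) (G : vecx -> vecx) (x : vecx) : Prop :=
  forall eps, eps > 0 -> exists delta, delta > 0 /\
    forall y, normx B d (subx y x) < delta -> normx B d (subx (G y) (G x)) < eps.

Definition has_gradd_on (d : nat) (S : vecd -> Prop) (f : vecd -> R) (g : vecd) (z : vecd) : Prop :=
  forall eps, eps > 0 -> exists delta, delta > 0 /\
    forall w, S w -> normd d (subd w z) < delta ->
      Rabs (f w - f z - ipd d g (subd w z)) <= eps * normd d (subd w z).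

Definition contd_on (d : nat) (S : vecd -> Prop) (G : vecd -> vecd) (z : vecd) : Prop :=
  forall eps, eps > 0 -> exists delta, delta > 0 /\
    forall w, S w -> normd d (subd w z) < delta -> normd d (subd (G w) (G z)) < eps.

Definition strongly_convex_on (d : nat) (S : vecd -> Prop) (tau : R) (f : vecd -> R) : Prop :=
  forall z w th, S z -> S w -> 0 <= th <= 1 ->
    f (combd th z w) <= th * f z + (1 - th) * f w
                        - tau / 2 * th * (1 - th) * (normd d (subd z w))^2.

Definition is_subgrad (d : nat) (r : vecd -> R) (g z : vecd) : Prop :=
  forall w, r w >= r z + ipd d g (subd w z).

(* directed reachability in the digraph with edge relation E (E j i : edge j -> i) *)
Inductive reach (E : nat -> nat -> Prop) : nat -> nat -> Prop :=
| reach_refl i : reach E i i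
| reach_step i j k : reach E i j -> E j k -> reach E i k.

(* (j,i) in E_l^t, i.e. (j,i) in E and j in N_{i,l}^t *)
Definition inEl (E : nat -> nat -> Prop) (sel : nat -> nat -> nat) (l t i j : nat) : Prop :=
  E j i /\ (sel j t = l \/ j = i).

Definition dx (sel : nat -> nat -> nat) (xt : nat -> nat -> vecd)
  (x : nat -> nat -> vecx) (t i l : nat) : vecd :=
  fun k => if Nat.eqb l (sel i t) then xt t i k - x t i l k else 0.

Definition fhat (N d : nat) (ft : nat -> nat -> vecd -> vecx -> R)
  (gf : nat -> vecx -> vecx) (i l : nat) (z : vecd) (w : vecx) (g : vecd) : R :=
  ft i l z w + ipd d (fun k => INR N * g k - gf i w l k) (subd z (w l)).

Definition track_err (N B d : nat) (gf : nat -> vecx -> vecx)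
  (x y : nat -> nat -> vecx) (t i : nat) : R :=
  normx B d (fun l k => y t i l k - / INR N * fsum N (fun j => gf j (x t j) l k)).

From Stdlib Require Import Reals ZArith Lra Lia Psatz Classical ClassicalEpsilon
  FunctionalExtensionality PropExtensionality.
Open Scope R_scope.

(* Push-sum mixing: for each block, the ratio [u_i / phi_i] of a push-sum recursion with
   injected perturbations [e] stays within a geometrically decaying convolution of the
   perturbations from the network average of [u] (strong connectivity, self-loops and the
   recurrent block selection make every window of [W] steps of the weight products
   uniformly positive).  Applied to [phi y], whose network sum always equals
   [sum_j grad f_j(x_j)], the perturbations are gradient increments, i.e. [L] times the
   movement of the iterates.  Applied to [phi x], the perturbations are [gamma t] times the
   local steps, which are bounded: strong convexity of the surrogate and a bounded
   subgradient of [r] (obtained by Hahn-Banach) put the block minimizer within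
   [(N |y| + M) / tau] of the current point.  So the iterates move by
   [O(gamma t + consensus error)], which tends to 0 and is summable against [gamma];
   convolution with the summable kernel preserves both properties. *)

Lemma fsum_ext n f g : (forall k, (k < n)%nat -> f k = g k) -> fsum n f = fsum n g.
Proof.
  induction n as [|n IH]; intros H; simpl; auto.
  rewrite IH by (intros; apply H; lia). rewrite H by lia. reflexivity.
Qed.

Lemma fsum_add n f g : fsum n (fun k => f k + g k) = fsum n f + fsum n g.
Proof. induction n as [|n IH]; simpl; [lra|]. rewrite IH; lra. Qed.

Lemma fsum_sub n f g : fsum n (fun k => f k - g k) = fsum n f - fsum n g.
Proof. induction n as [|n IH]; simpl; [lra|]. rewrite IH; lra. Qed.

Lemma fsum_scal_l n c f : fsum n (fun k => c * f k) = c * fsum n f.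
Proof. induction n as [|n IH]; simpl; [lra|]. rewrite IH; lra. Qed.

Lemma fsum_scal_r n c f : fsum n (fun k => f k * c) = fsum n f * c.
Proof. induction n as [|n IH]; simpl; [lra|]. rewrite IH; lra. Qed.

Lemma fsum_eq0 n f : (forall k, (k < n)%nat -> f k = 0) -> fsum n f = 0.
Proof.
  induction n as [|n IH]; intros H; simpl; auto.
  rewrite IH, H by (intros; try apply H; lia). lra.
Qed.

Lemma fsum_const n c : fsum n (fun _ => c) = INR n * c.
Proof.
  induction n as [|n IH]; [simpl; lra|].
  change (fsum n (fun _ => c) + c = INR (S n) * c). rewrite IH, S_INR. lra.
Qed.

Lemma fsum_le n f g : (forall k, (k < n)%nat -> f k <= g k) -> fsum n f <= fsum n g.
Proof.
  induction n as [|n IH]; intros H; simpl; [lra|].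
  apply Rplus_le_compat; [apply IH; intros; apply H|apply H]; lia.
Qed.

Lemma fsum_ge0 n f : (forall k, (k < n)%nat -> 0 <= f k) -> 0 <= fsum n f.
Proof. intros H. rewrite <- (fsum_eq0 n (fun _ => 0)) by auto. now apply fsum_le. Qed.

Lemma fsum_abs n f : Rabs (fsum n f) <= fsum n (fun k => Rabs (f k)).
Proof.
  induction n as [|n IH]; simpl; [rewrite Rabs_R0; lra|].
  eapply Rle_trans; [apply Rabs_triang|]. lra.
Qed.

Lemma fsum_term_le n f j : (forall k, (k < n)%nat -> 0 <= f k) -> (j < n)%nat -> f j <= fsum n f.
Proof.
  induction n as [|n IH]; simpl; intros H Hj; [lia|].
  assert (0 <= fsum n f) by (apply fsum_ge0; intros; apply H; lia).
  destruct (Nat.eq_dec j n) as [->|Hjn]; [lra|].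
  assert (f j <= fsum n f) by (apply IH; [intros; apply H|]; lia).
  assert (0 <= f n) by (apply H; lia). lra.
Qed.

Lemma fsum_comm n m (f : nat -> nat -> R) :
  fsum n (fun i => fsum m (fun j => f i j)) = fsum m (fun j => fsum n (fun i => f i j)).
Proof.
  induction n as [|n IH]; simpl; [symmetry; now apply fsum_eq0|].
  rewrite IH, <- fsum_add. reflexivity.
Qed.

Lemma sum_f_R0_fsum g n : sum_f_R0 g n = fsum (S n) g.
Proof. induction n as [|n IH]; simpl; [lra|]. rewrite IH. simpl. lra. Qed.

Lemma fsum_split n m f : fsum (n + m) f = fsum n f + fsum m (fun k => f (n + k)%nat).
Proof.
  induction m as [|m IH]; simpl; [rewrite Nat.add_0_r; lra|].
  rewrite Nat.add_succ_r. simpl. rewrite IH. lra.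
Qed.

Lemma fsum_first n f : fsum (S n) f = f O + fsum n (fun k => f (S k)).
Proof. replace (S n) with (1 + n)%nat by lia. rewrite fsum_split. simpl. lra. Qed.

Lemma fsum_le_length f n m : (forall k, 0 <= f k) -> (n <= m)%nat -> fsum n f <= fsum m f.
Proof. intros H Hnm. induction Hnm as [|m _ IH]; simpl; [lra|]. specialize (H m). lra. Qed.

Lemma fsum_rev m f : fsum m (fun j => f (m - S j)%nat) = fsum m f.
Proof.
  revert f. induction m as [|m IH]; intros f; auto.
  rewrite (fsum_ext (S m) _ (fun j => f (m - j)%nat)) by (intros; f_equal; lia).
  rewrite fsum_first, Nat.sub_0_r. cbv beta. rewrite IH. simpl. lra.
Qed.

Definition kron (i j : nat) : R := if Nat.eqb i j then 1 else 0.

Lemma fsum_kron_l n f j : (j < n)%nat -> fsum n (fun m => kron j m * f m) = f j.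
Proof.
  induction n as [|n IH]; intros Hj; [lia|]. simpl. unfold kron at 2.
  destruct (Nat.eq_dec j n) as [->|Hjn].
  - rewrite Nat.eqb_refl, fsum_eq0; [ring|].
    intros k Hk. unfold kron. destruct (Nat.eqb_spec n k); [lia|ring].
  - rewrite IH by lia. destruct (Nat.eqb_spec j n); [lia|ring].
Qed.

Lemma fsum_kron_r n f j : (j < n)%nat -> fsum n (fun m => f m * kron m j) = f j.
Proof.
  intros Hj. rewrite <- (fsum_kron_l n f j Hj). apply fsum_ext; intros m _.
  unfold kron. rewrite Nat.eqb_sym. ring.
Qed.

Lemma Rabs_le_inv x e : Rabs x <= e -> - e <= x <= e.
Proof. intros H. destruct (Rcase_abs x); [rewrite Rabs_left in H|rewrite Rabs_right in H]; lra. Qed.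

Lemma sqrt_le_of_sqr a s : 0 <= a -> s <= a * a -> sqrt s <= a.
Proof. intros Ha Hs. rewrite <- (sqrt_square a Ha). now apply sqrt_le_1_alt. Qed.

Lemma fsum_sqr_le n f : (forall k, (k < n)%nat -> 0 <= f k) ->
  fsum n (fun k => f k * f k) <= fsum n f * fsum n f.
Proof.
  induction n as [|n IH]; simpl; intros H; [lra|].
  assert (0 <= fsum n f) by (apply fsum_ge0; intros; apply H; lia).
  assert (0 <= f n) by (apply H; lia).
  assert (fsum n (fun k => f k * f k) <= fsum n f * fsum n f) by (apply IH; intros; apply H; lia).
  nra.
Qed.

Lemma ipd_self_ge0 d u : 0 <= ipd d u u.
Proof. apply fsum_ge0. intros; nra. Qed.

Lemma normd_ge0 d u : 0 <= normd d u.
Proof. apply sqrt_pos. Qed.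

Lemma normd_sqr d u : normd d u * normd d u = ipd d u u.
Proof. apply sqrt_sqrt, ipd_self_ge0. Qed.

Lemma normd_ext d u u' : (forall k, (k < d)%nat -> u k = u' k) -> normd d u = normd d u'.
Proof. intros H. unfold normd, ipd. f_equal. apply fsum_ext; intros; rewrite H; auto. Qed.

Lemma normd_eq0 d u : (forall k, (k < d)%nat -> u k = 0) -> normd d u = 0.
Proof. intros H. unfold normd, ipd. rewrite fsum_eq0; [apply sqrt_0|]. intros k Hk; rewrite H; auto; lra. Qed.

Lemma normd_scal d th u : 0 <= th -> normd d (fun k => th * u k) = th * normd d u.
Proof.
  intros Hth. unfold normd, ipd.
  rewrite (fsum_ext d _ (fun k => (th * th) * (u k * u k))) by (intros; ring).
  rewrite fsum_scal_l, sqrt_mult_alt by nra. now rewrite sqrt_square.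
Qed.

Lemma normd_sub_comm d z u : normd d (subd u z) = normd d (subd z u).
Proof. unfold normd, ipd, subd. f_equal. apply fsum_ext; intros; ring. Qed.

Lemma normd_coord d u k : (k < d)%nat -> Rabs (u k) <= normd d u.
Proof.
  intros Hk. rewrite <- sqrt_Rsqr_abs. apply sqrt_le_1_alt. unfold Rsqr, ipd.
  apply (fsum_term_le d (fun k => u k * u k)); auto. intros; nra.
Qed.

Lemma normd_le_sum_abs d u : normd d u <= fsum d (fun k => Rabs (u k)).
Proof.
  apply sqrt_le_of_sqr; [apply fsum_ge0; intros; apply Rabs_pos|].
  eapply Rle_trans; [|apply fsum_sqr_le; intros; apply Rabs_pos].
  right. apply fsum_ext. intros. rewrite <- Rabs_mult, Rabs_right; nra.
Qed.

Lemma ipd_ext d g u u' : (forall k, (k < d)%nat -> u k = u' k) -> ipd d g u = ipd d g u'.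
Proof. intros H; apply fsum_ext; intros; rewrite H; auto. Qed.

Lemma ipd_ext_l d g g' u : (forall k, (k < d)%nat -> g k = g' k) -> ipd d g u = ipd d g' u.
Proof. intros H; apply fsum_ext; intros; rewrite H; auto. Qed.

Lemma ipd_scal_r d g th u : ipd d g (fun k => th * u k) = th * ipd d g u.
Proof. unfold ipd. rewrite <- fsum_scal_l. apply fsum_ext; intros; ring. Qed.

Lemma ipd_opp_r d g u : ipd d g (fun k => - u k) = - ipd d g u.
Proof.
  rewrite (ipd_ext d g _ (fun k => -1 * u k)) by (intros; ring).
  rewrite ipd_scal_r. ring.
Qed.

Lemma ipd_add_r d g u v : ipd d g (fun k => u k + v k) = ipd d g u + ipd d g v.
Proof. unfold ipd. rewrite <- fsum_add. apply fsum_ext; intros; ring. Qed.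

Lemma ipd_add_l d g h u : ipd d (fun k => g k + h k) u = ipd d g u + ipd d h u.
Proof. unfold ipd. rewrite <- fsum_add. apply fsum_ext; intros; ring. Qed.

Lemma ipd_sub_l d g h u : ipd d (fun k => g k - h k) u = ipd d g u - ipd d h u.
Proof. unfold ipd. rewrite <- fsum_sub. apply fsum_ext; intros; ring. Qed.

Lemma ipd_eq0_of_normd d u v : normd d u = 0 -> ipd d u v = 0.
Proof.
  intros Hu. apply fsum_eq0. intros k Hk.
  pose proof (normd_coord d u k Hk) as H. rewrite Hu in H.
  assert (u k = 0) as -> by (pose proof (Rabs_pos (u k)); apply Rabs_le_inv in H; lra). ring.
Qed.

Lemma ipd_Cauchy_Schwarz d u v : ipd d u v <= normd d u * normd d v.
Proof.
  set (a := normd d u). set (b := normd d v).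
  assert (Ha : 0 <= a) by apply normd_ge0. assert (Hb : 0 <= b) by apply normd_ge0.
  destruct (Req_dec a 0) as [Ha0|Ha0]; [rewrite ipd_eq0_of_normd, Ha0 by auto; lra|].
  destruct (Req_dec b 0) as [Hb0|Hb0].
  { unfold ipd. rewrite (fsum_ext d _ (fun k => v k * u k)) by (intros; ring).
    change (ipd d v u <= a * b). rewrite ipd_eq0_of_normd, Hb0 by auto; lra. }
  (* expand 0 <= |b u - a v|^2 *)
  assert (Hs : 0 <= fsum d (fun k => (b * u k - a * v k) * (b * u k - a * v k)))
    by (apply fsum_ge0; intros k _; apply Rle_0_sqr).
  assert (E : fsum d (fun k => (b * u k - a * v k) * (b * u k - a * v k)) =
     b * b * ipd d u u - 2 * a * b * ipd d u v + a * a * ipd d v v).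
  { unfold ipd. rewrite <- !fsum_scal_l, <- fsum_sub, <- fsum_add. apply fsum_ext; intros; ring. }
  rewrite E, <- (normd_sqr d u), <- (normd_sqr d v) in Hs. fold a b in Hs.
  assert (0 < a * b) by (apply Rmult_lt_0_compat; lra). nra.
Qed.

Lemma normx_ge0 B d x : 0 <= normx B d x.
Proof. apply sqrt_pos. Qed.

Lemma normd_le_normx B d x l : (l < B)%nat -> normd d (x l) <= normx B d x.
Proof.
  intros Hl. apply sqrt_le_1_alt.
  apply (fsum_term_le B (fun l => ipd d (x l) (x l))); auto. intros; apply ipd_self_ge0.
Qed.

Lemma normx_coord B d x l k : (l < B)%nat -> (k < d)%nat -> Rabs (x l k) <= normx B d x.
Proof. intros; eapply Rle_trans; [apply normd_coord; eauto|now apply normd_le_normx]. Qed.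

Lemma normx_le_sum_abs B d x : normx B d x <= fsum B (fun l => fsum d (fun k => Rabs (x l k))).
Proof.
  apply sqrt_le_of_sqr; [apply fsum_ge0; intros; apply fsum_ge0; intros; apply Rabs_pos|].
  eapply Rle_trans; [|apply fsum_sqr_le; intros; apply fsum_ge0; intros; apply Rabs_pos].
  apply fsum_le. intros l Hl. fold (ipd d (x l) (x l)).
  rewrite <- normd_sqr. pose proof (normd_ge0 d (x l)). pose proof (normd_le_sum_abs d (x l)). nra.
Qed.

Lemma normx_le_const B d x c : (forall l k, (l < B)%nat -> (k < d)%nat -> Rabs (x l k) <= c) ->
  normx B d x <= INR B * (INR d * c).
Proof.
  intros H. eapply Rle_trans; [apply normx_le_sum_abs|].
  rewrite <- fsum_const. apply fsum_le. intros l Hl.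
  rewrite <- fsum_const. apply fsum_le. auto.
Qed.

(** * Sequences, series and discrete convolution *)

Definition bounded_partial_sums (f : nat -> R) := exists Bd, forall n, fsum n f <= Bd.

Lemma bps_le f g : (forall n, 0 <= f n <= g n) -> bounded_partial_sums g -> bounded_partial_sums f.
Proof.
  intros H [Bd HB]. exists Bd. intros n. eapply Rle_trans; [|apply HB].
  apply fsum_le. intros; apply H.
Qed.

Lemma bps_add f g : bounded_partial_sums f -> bounded_partial_sums g ->
  bounded_partial_sums (fun n => f n + g n).
Proof. intros [B1 H1] [B2 H2]. exists (B1 + B2). intros n. rewrite fsum_add. specialize (H1 n); specialize (H2 n); lra. Qed.

Lemma bps_scal c f : 0 <= c -> bounded_partial_sums f -> bounded_partial_sums (fun n => c * f n).
Proof. intros Hc [B1 H1]. exists (c * B1). intros n. rewrite fsum_scal_l. now apply Rmult_le_compat_l. Qed.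

Lemma bps_shift f : (forall n, 0 <= f n) -> bounded_partial_sums f -> bounded_partial_sums (fun n => f (S n)).
Proof. intros H0 [B1 H1]. exists (B1 - f O). intros n. specialize (H1 (S n)). rewrite fsum_first in H1. lra. Qed.

Lemma bps_infinite_sum f : (forall n, 0 <= f n) -> bounded_partial_sums f -> exists s, infinite_sum f s.
Proof.
  intros H0 [Bd HB].
  destruct (growing_cv (fun n => sum_f_R0 f n)) as [l Hl].
  - intros n. simpl. specialize (H0 (S n)). lra.
  - exists Bd. intros x [n ->]. rewrite sum_f_R0_fsum. apply HB.
  - now exists l.
Qed.

Lemma infinite_sum_bps f s : (forall n, 0 <= f n) -> infinite_sum f s -> bounded_partial_sums f.
Proof.
  intros H0 Hs. destruct (Hs 1 ltac:(lra)) as [N0 HN].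
  assert (Hb : forall n, (N0 <= n)%nat -> fsum (S n) f <= s + 1).
  { intros n Hn. pose proof (HN n Hn) as H. unfold Rdist in H. rewrite <- sum_f_R0_fsum.
    apply Rlt_le, Rabs_le_inv in H. lra. }
  exists (s + 1). intros n. destruct (Compare_dec.le_lt_dec n (S N0)).
  - eapply Rle_trans; [apply (fsum_le_length f n (S N0)); auto|]. now apply Hb.
  - replace n with (S (pred n)) by lia. apply Hb. lia.
Qed.

Lemma cv0_ext f g : (forall n, f n = g n) -> Un_cv g 0 -> Un_cv f 0.
Proof. intros H Hg eps He. destruct (Hg eps He) as [N0 HN0]. exists N0. intros n Hn. rewrite H. auto. Qed.

Lemma cv0_squeeze f g : (forall n, 0 <= f n <= g n) -> Un_cv g 0 -> Un_cv f 0.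
Proof.
  intros H Hg eps He. destruct (Hg eps He) as [N0 HN]. exists N0. intros n Hn.
  specialize (HN n Hn). unfold Rdist in *. rewrite Rminus_0_r in *. specialize (H n).
  rewrite Rabs_right in * by lra. lra.
Qed.

Lemma cv0_add f g : Un_cv f 0 -> Un_cv g 0 -> Un_cv (fun n => f n + g n) 0.
Proof. intros Hf Hg. rewrite <- (Rplus_0_r 0). now apply CV_plus. Qed.

Lemma cv0_scal c f : Un_cv f 0 -> Un_cv (fun n => c * f n) 0.
Proof.
  intros Hf. rewrite <- (Rmult_0_r c). apply CV_mult; auto.
  intros eps He. exists O. intros. unfold Rdist. rewrite Rminus_diag, Rabs_R0. lra.
Qed.

Lemma cv0_shift f : Un_cv f 0 -> Un_cv (fun n => f (S n)) 0.
Proof. intros Hf eps He. destruct (Hf eps He) as [N1 H1]. exists N1. intros n Hn. apply H1. lia. Qed.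

Lemma decreasing_le (g : nat -> R) : (forall t, g (S t) <= g t) ->
  forall s t, (s <= t)%nat -> g t <= g s.
Proof. intros H s t Hst. induction Hst as [|t _ IH]; [lra|]. specialize (H t). lra. Qed.

(* [(n + 1) g(n)^2 <= sum_{s <= n} g(s)^2] since [g] decreases. *)
Lemma cv0_of_decreasing_sqr_summable (g : nat -> R) : (forall t, 0 < g t) ->
  (forall t, g (S t) <= g t) -> bounded_partial_sums (fun t => g t ^ 2) -> Un_cv g 0.
Proof.
  intros Hp Hd [Bd HB] eps He.
  assert (Hb : forall t, INR (S t) * (g t ^ 2) <= Bd).
  { intros t. eapply Rle_trans; [|apply (HB (S t))]. rewrite <- fsum_const. apply fsum_le.
    intros s Hs. pose proof (decreasing_le g Hd s t ltac:(lia)). pose proof (Hp t). simpl. nra. }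
  assert (HB0 : 0 <= Bd) by (specialize (Hb O); pose proof (Hp O); simpl in Hb; nra).
  destruct (archimed (Bd / (eps * eps))) as [Hz _].
  assert (0 <= Bd / (eps * eps)) by (apply Rmult_le_pos; auto; left; apply Rinv_0_lt_compat; nra).
  exists (Z.to_nat (up (Bd / (eps * eps)))). intros n Hn. unfold Rdist. rewrite Rminus_0_r.
  rewrite Rabs_right by (apply Rle_ge; left; auto).
  assert (Hn' : Bd / (eps * eps) < INR (S n)).
  { apply Rlt_le_trans with (IZR (up (Bd / (eps * eps)))); auto.
    rewrite <- (Z2Nat.id (up (Bd / (eps * eps)))), <- INR_IZR_INZ by (apply le_IZR; lra).
    apply le_INR. lia. }
  assert (Bd < INR (S n) * (eps * eps)).
  { apply Rmult_lt_reg_r with (/ (eps * eps)); [apply Rinv_0_lt_compat; nra|].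
    replace (INR (S n) * (eps * eps) * / (eps * eps)) with (INR (S n)) by (field; lra). auto. }
  specialize (Hb n). pose proof (Hp n). assert (0 < INR (S n)) by (apply lt_0_INR; lia).
  replace (g n ^ 2) with (g n * g n) in Hb by ring.
  assert (g n * g n < eps * eps) by nra. nra.
Qed.

Definition conv (k c : nat -> R) (t : nat) : R := fsum t (fun s => k (t - s)%nat * c s).

Lemma conv_scal_decreasing_le (k c g : nat -> R) n t :
  (forall n, 0 <= k n) -> (forall n, 0 <= c n) -> (forall n, 0 <= g n) ->
  (forall t, g (S t) <= g t) -> (n <= S t)%nat ->
  g t * conv k c n <= conv k (fun s => g s * c s) n.
Proof.
  intros Hk Hc Hg Hdec Hn. unfold conv. rewrite <- fsum_scal_l. apply fsum_le. intros s Hs.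
  pose proof (decreasing_le g Hdec s t ltac:(lia)). pose proof (Hk (n - s)%nat). pose proof (Hc s).
  replace (k (n - s)%nat * (g s * c s)) with (g s * (k (n - s)%nat * c s)) by ring.
  apply Rmult_le_compat_r; [now apply Rmult_le_pos|auto].
Qed.

Section Convolution.

Variable k : nat -> R.
Variable K : R.
Hypothesis k_ge0 : forall n, 0 <= k n.
Hypothesis k_sums : forall n, fsum n k <= K.

Lemma conv_ge0 c t : (forall n, 0 <= c n) -> 0 <= conv k c t.
Proof. intros. apply fsum_ge0. intros. now apply Rmult_le_pos. Qed.

Lemma conv_const_le t c : 0 <= c -> fsum t (fun s => k (t - s)%nat * c) <= K * c.
Proof.
  intros Hc. rewrite fsum_scal_r. apply Rmult_le_compat_r; auto.
  rewrite (fsum_ext t _ (fun s => (fun i => k (S i)) (t - S s)%nat)) by (intros; f_equal; lia).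
  pose proof (fsum_rev t (fun i => k (S i))) as Hrev. cbv beta in Hrev. rewrite Hrev.
  pose proof (k_sums (S t)) as H. rewrite fsum_first in H. pose proof (k_ge0 O). lra.
Qed.

Lemma bps_conv c : (forall n, 0 <= c n) -> bounded_partial_sums c -> bounded_partial_sums (conv k c).
Proof.
  intros Hc [Bd HBd]. exists (K * Bd). intros T.
  assert (Hswap : forall T, fsum T (conv k c) <= fsum T (fun s => c s * fsum (T - s) k)).
  { induction T0 as [|T0 IH]; [simpl; lra|].
    change (fsum (S T0) (conv k c)) with (fsum T0 (conv k c) + conv k c T0).
    change (fsum (S T0) (fun s => c s * fsum (S T0 - s) k))
      with (fsum T0 (fun s => c s * fsum (S T0 - s) k) + c T0 * fsum (S T0 - T0) k).
    replace (S T0 - T0)%nat with 1%nat by lia.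
    rewrite (fsum_ext T0 (fun s => c s * fsum (S T0 - s) k)
               (fun s => c s * fsum (T0 - s) k + k (T0 - s)%nat * c s)).
    2:{ intros s Hs. replace (S T0 - s)%nat with (S (T0 - s)) by lia. simpl. ring. }
    unfold conv at 2. simpl (fsum 1 k).
    rewrite fsum_add. pose proof (k_ge0 O). pose proof (Hc T0). nra. }
  eapply Rle_trans; [apply Hswap|]. eapply Rle_trans; [|apply Rmult_le_compat_l, HBd].
  - rewrite <- fsum_scal_l. apply fsum_le. intros s Hs.
    rewrite Rmult_comm. apply Rmult_le_compat_r; auto.
  - specialize (k_sums O). simpl in k_sums. lra.
Qed.

Hypothesis k_cv0 : Un_cv k 0.

(* split [conv k c t] at [S0] beyond which [c] is small; the early terms see a small kernel *)
Lemma conv_cv0 c : (forall n, 0 <= c n) -> Un_cv c 0 -> Un_cv (conv k c) 0.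
Proof.
  intros Hc Hcc eps He.
  assert (HK0 : 0 <= K) by (specialize (k_sums O); simpl in k_sums; lra).
  destruct (Hcc (eps / (2 * (K + 1)))) as [S0 HS0]; [apply Rdiv_lt_0_compat; lra|].
  set (C := fsum S0 c + 1).
  assert (HC : 0 < C) by (unfold C; pose proof (fsum_ge0 S0 c (fun k _ => Hc k)); lra).
  destruct (k_cv0 (eps / (2 * C))) as [T0 HT0]; [apply Rdiv_lt_0_compat; lra|].
  exists (S0 + T0)%nat. intros t Ht. unfold Rdist. rewrite Rminus_0_r.
  rewrite Rabs_right by (apply Rle_ge, conv_ge0; auto).
  unfold conv. replace t with (S0 + (t - S0))%nat at 1 by lia. rewrite fsum_split.
  assert (Hearly : fsum S0 (fun s => k (t - s)%nat * c s) <= eps / (2 * C) * fsum S0 c).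
  { rewrite <- fsum_scal_l. apply fsum_le. intros s Hs. apply Rmult_le_compat_r; auto.
    specialize (HT0 (t - s)%nat ltac:(lia)). unfold Rdist in HT0.
    rewrite Rminus_0_r, Rabs_right in HT0 by (apply Rle_ge; auto). lra. }
  assert (Hlate : fsum (t - S0) (fun j => k (t - (S0 + j))%nat * c (S0 + j)%nat)
                  <= K * (eps / (2 * (K + 1)))).
  { eapply Rle_trans with (fsum (t - S0) (fun j => k (t - (S0 + j))%nat * (eps / (2 * (K + 1))))).
    - apply fsum_le. intros j Hj. apply Rmult_le_compat_l; auto.
      specialize (HS0 (S0 + j)%nat ltac:(lia)). unfold Rdist in HS0.
      rewrite Rminus_0_r, Rabs_right in HS0 by (apply Rle_ge; auto). lra.
    - rewrite (fsum_ext (t - S0) _ (fun j => k (t - S0 - j)%nat * (eps / (2 * (K + 1)))))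
        by (intros; do 2 f_equal; lia).
      apply conv_const_le. left; apply Rdiv_lt_0_compat; lra. }
  assert (eps / (2 * C) * fsum S0 c <= eps / 2).
  { replace (eps / 2) with (eps / (2 * C) * C) by (field; lra). apply Rmult_le_compat_l.
    - left; apply Rdiv_lt_0_compat; lra.
    - unfold C; lra. }
  assert (K * (eps / (2 * (K + 1))) < eps / 2).
  { replace (eps / 2) with ((K + 1) * (eps / (2 * (K + 1)))) by (field; lra).
    apply Rmult_lt_compat_r; [apply Rdiv_lt_0_compat|]; lra. }
  lra.
Qed.

End Convolution.

Definition gkernel (rho : R) (W n : nat) : R := rho ^ (n / W).

Section GeometricKernel.

Variable rho : R.
Hypothesis rho_ge0 : 0 <= rho.
Hypothesis rho_lt1 : rho < 1.
Variable W : nat.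
Hypothesis W_pos : (1 <= W)%nat.

Lemma gkernel_ge0 n : 0 <= gkernel rho W n.
Proof. now apply pow_le. Qed.

Lemma gkernel_le1 n : gkernel rho W n <= 1.
Proof. unfold gkernel. rewrite <- (pow1 (n / W)). apply pow_incr; lra. Qed.

Lemma fsum_geom_le m : fsum m (fun j => rho ^ j) <= 1 / (1 - rho).
Proof.
  assert (fsum m (fun j => rho ^ j) * (1 - rho) = 1 - rho ^ m).
  { induction m as [|m IH]; simpl; [ring|]. rewrite Rmult_plus_distr_r, IH. ring. }
  assert (0 <= rho ^ m) by now apply pow_le.
  apply Rmult_le_reg_r with (1 - rho); [lra|].
  replace (1 / (1 - rho) * (1 - rho)) with 1 by (field; lra). lra.
Qed.

Lemma fsum_gkernel_blocks m : fsum (m * W) (gkernel rho W) = INR W * fsum m (fun j => rho ^ j).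
Proof.
  induction m as [|m IH]; [simpl; ring|].
  replace (S m * W)%nat with (m * W + W)%nat by lia. rewrite fsum_split, IH.
  change (fsum (S m) (fun j => rho ^ j)) with (fsum m (fun j => rho ^ j) + rho ^ m).
  rewrite (fsum_ext W _ (fun _ => rho ^ m)), fsum_const; [ring|].
  intros k Hk. unfold gkernel. f_equal.
  rewrite Nat.add_comm, Nat.div_add, Nat.div_small by lia. lia.
Qed.

Lemma fsum_gkernel_le n : fsum n (gkernel rho W) <= INR W / (1 - rho).
Proof.
  eapply Rle_trans; [apply (fsum_le_length _ n ((n / W + 1) * W)); [apply gkernel_ge0|]|].
  - pose proof (Nat.div_mod n W ltac:(lia)). pose proof (Nat.mod_upper_bound n W ltac:(lia)). nia.
  - rewrite fsum_gkernel_blocks. unfold Rdiv. rewrite <- (Rmult_1_l (/ (1 - rho))).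
    apply Rmult_le_compat_l; [apply pos_INR|]. apply fsum_geom_le.
Qed.

Lemma gkernel_cv0 : Un_cv (gkernel rho W) 0.
Proof.
  intros eps He. unfold Rdist, gkernel. destruct (Req_dec rho 0) as [Hr|Hr].
  - exists W. intros n Hn. rewrite Rminus_0_r, Hr.
    assert (1 <= n / W)%nat by (apply Nat.div_le_lower_bound; lia).
    destruct (n / W)%nat; [lia|]. simpl. rewrite Rmult_0_l, Rabs_R0. lra.
  - destruct (pow_lt_1_zero rho ltac:(rewrite Rabs_right; lra) eps He) as [N1 H1].
    exists (N1 * W)%nat. intros n Hn. rewrite Rminus_0_r. apply H1.
    apply Nat.div_le_lower_bound; lia.
Qed.

End GeometricKernel.

(** * Products of column-stochastic matrices *)

Lemma exists_uniform_nat (Q : nat -> nat -> Prop) n :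
  (forall i w w', Q i w -> (w <= w')%nat -> Q i w') ->
  (forall i, (i < n)%nat -> exists w, Q i w) -> exists w, forall i, (i < n)%nat -> Q i w.
Proof.
  intros Hmono. induction n as [|n IH]; intros H; [exists O; intros; lia|].
  destruct IH as [w Hw]; [intros; apply H; lia|].
  destruct (H n) as [w' Hw']; [lia|].
  exists (Nat.max w w'). intros i Hi. destruct (Nat.eq_dec i n) as [->|Hin].
  - eapply Hmono; eauto; lia.
  - eapply Hmono; [apply Hw; lia|lia].
Qed.

Lemma weighted_avg_window n (v M : nat -> R) lo w eta :
  (forall q, (q < n)%nat -> lo <= v q <= lo + w) ->
  (forall q, (q < n)%nat -> eta <= M q) -> fsum n M = 1 ->
  lo + eta * fsum n (fun q => v q - lo) <= fsum n (fun q => v q * M q) <=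
  lo + eta * fsum n (fun q => v q - lo) + w * (1 - INR n * eta).
Proof.
  intros Hv HM HS. split.
  - replace (fsum n (fun q => v q * M q)) with (lo * fsum n M + fsum n (fun q => (v q - lo) * M q))
      by (rewrite <- fsum_scal_l, <- fsum_add; apply fsum_ext; intros; ring).
    rewrite HS, Rmult_1_r, <- fsum_scal_l. apply Rplus_le_compat_l, fsum_le. intros q Hq.
    specialize (Hv q Hq); specialize (HM q Hq). nra.
  - replace (fsum n (fun q => v q * M q))
      with ((lo + w) * fsum n M - fsum n (fun q => (lo + w - v q) * M q))
      by (rewrite <- fsum_scal_l, <- fsum_sub; apply fsum_ext; intros; ring).
    rewrite HS, Rmult_1_r.
    assert (eta * fsum n (fun q => lo + w - v q) <= fsum n (fun q => (lo + w - v q) * M q)).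
    { rewrite <- fsum_scal_l. apply fsum_le. intros q Hq.
      specialize (Hv q Hq); specialize (HM q Hq). nra. }
    assert (fsum n (fun q => lo + w - v q) = INR n * w - fsum n (fun q => v q - lo))
      by (rewrite <- fsum_const, <- fsum_sub; apply fsum_ext; intros; ring).
    nra.
Qed.

Section StochasticProducts.

Variable N : nat.
Variable A : nat -> nat -> nat -> R.
Hypothesis A_ge0 : forall t i j, (i < N)%nat -> (j < N)%nat -> 0 <= A t i j.
Hypothesis A_col : forall t j, (j < N)%nat -> fsum N (fun i => A t i j) = 1.

(* [mprod s n] is the backward product A(s+n-1) ... A(s+1) A(s). *)
Fixpoint mprod (s n : nat) : nat -> nat -> R :=
  match n with
  | O => kron
  | S n' => fun i j => fsum N (fun m => A (s + n') i m * mprod s n' m j)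
  end.

Lemma mprod_ge0 s n i j : (i < N)%nat -> (j < N)%nat -> 0 <= mprod s n i j.
Proof.
  revert i. induction n as [|n IH]; intros i Hi Hj; simpl.
  - unfold kron. destruct (Nat.eqb i j); lra.
  - apply fsum_ge0. intros m Hm. apply Rmult_le_pos; auto.
Qed.

Lemma mprod_col s n j : (j < N)%nat -> fsum N (fun i => mprod s n i j) = 1.
Proof.
  induction n as [|n IH]; intros Hj; simpl.
  - rewrite (fsum_ext N _ (fun i => 1 * kron i j)) by (intros; ring). now apply fsum_kron_r.
  - rewrite fsum_comm, <- (IH Hj). apply fsum_ext. intros m Hm.
    rewrite fsum_scal_r, A_col; auto; ring.
Qed.

Lemma mprod_le1 s n i j : (i < N)%nat -> (j < N)%nat -> mprod s n i j <= 1.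
Proof.
  intros. rewrite <- (mprod_col s n j) by auto.
  apply (fsum_term_le N (fun i => mprod s n i j)); auto. intros; now apply mprod_ge0.
Qed.

Lemma mprod_one t i q : (i < N)%nat -> (q < N)%nat -> mprod t 1 i q = A t i q.
Proof. intros. simpl. rewrite Nat.add_0_r. now apply fsum_kron_r. Qed.

Lemma mprod_add s n m i j : (i < N)%nat -> (j < N)%nat ->
  mprod s (n + m) i j = fsum N (fun q => mprod (s + n) m i q * mprod s n q j).
Proof.
  revert i. induction m as [|m IH]; intros i Hi Hj.
  - simpl. rewrite Nat.add_0_r. symmetry. now apply (fsum_kron_l N (fun q => mprod s n q j)).
  - rewrite Nat.add_succ_r. simpl.
    rewrite (fsum_ext N _ (fun p => fsum N (fun q =>
               A (s + (n + m)) i p * mprod (s + n) m p q * mprod s n q j))).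
    2:{ intros p Hp. rewrite IH, <- fsum_scal_l by auto. apply fsum_ext; intros; ring. }
    rewrite fsum_comm. apply fsum_ext. intros q Hq. rewrite <- fsum_scal_r.
    apply fsum_ext. intros p Hp. rewrite Nat.add_assoc. ring.
Qed.

Lemma mprod_ge_via s n m i q j : (i < N)%nat -> (j < N)%nat -> (q < N)%nat ->
  mprod (s + n) m i q * mprod s n q j <= mprod s (n + m) i j.
Proof.
  intros. rewrite mprod_add by auto.
  apply (fsum_term_le N (fun q => mprod (s + n) m i q * mprod s n q j)); auto.
  intros; apply Rmult_le_pos; now apply mprod_ge0.
Qed.

Variable kappa : R.
Hypothesis kappa_pos : 0 < kappa.
Hypothesis A_diag : forall t i, (i < N)%nat -> kappa <= A t i i.

Lemma mprod_diag_ge s n i : (i < N)%nat -> kappa ^ n <= mprod s n i i.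
Proof.
  induction n as [|n IH]; intros Hi; simpl; [unfold kron; rewrite Nat.eqb_refl; lra|].
  eapply Rle_trans; [|apply (fsum_term_le N (fun m => A (s + n) i m * mprod s n m i) i)]; auto.
  - apply Rmult_le_compat; auto; [lra|]. left; apply pow_lt; lra.
  - intros; apply Rmult_le_pos; auto; now apply mprod_ge0.
Qed.

Lemma kappa_le1 : (0 < N)%nat -> kappa <= 1.
Proof.
  intros HN. rewrite <- (A_col 0 0) by auto.
  eapply Rle_trans; [apply (A_diag 0 0); auto|].
  apply (fsum_term_le N (fun i => A 0 i 0)); auto.
Qed.

(* [act j t]: node [j] is active at time [t], so that its out-edges of [Ed] carry weight. *)
Variable Ed : nat -> nat -> Prop.
Variable act : nat -> nat -> Prop.
Hypothesis Ed_nodes : forall j i, Ed j i -> (j < N)%nat /\ (i < N)%nat.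
Hypothesis A_edge : forall t i j, Ed j i -> act j t -> kappa <= A t i j.
Variable T : nat.
Hypothesis act_recurrent : forall j t, (j < N)%nat -> exists s, (s < T)%nat /\ act j (t + s).

Lemma mprod_ge_pow_of_reach j i : reach Ed j i -> (j < N)%nat -> (i < N)%nat -> exists n0,
  forall s n, (n0 <= n)%nat -> kappa ^ n <= mprod s n i j.
Proof.
  induction 1 as [i|j k i Hr IH He]; intros Hj Hi.
  - exists O. intros; now apply mprod_diag_ge.
  - destruct (Ed_nodes _ _ He) as [Hk _].
    destruct (IH Hj Hk) as [n0 Hn0]. exists (n0 + T)%nat. intros s n Hn.
    (* wait at [k] until it is active, cross the edge [k -> i], then stay at [i] *)
    destruct (act_recurrent k (s + n0) Hk) as [sg [Hsg Hact]].
    set (m := (n0 + sg)%nat).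
    assert (Hcross : kappa ^ S m <= mprod s (S m) i j).
    { simpl. eapply Rle_trans; [|apply (fsum_term_le N (fun p => A (s + m) i p * mprod s m p j) k)]; auto.
      - apply Rmult_le_compat; try lra; [left; apply pow_lt; lra| |].
        + apply A_edge; auto. unfold m; now rewrite Nat.add_assoc.
        + apply Hn0; unfold m; lia.
      - intros; apply Rmult_le_pos; auto; now apply mprod_ge0. }
    assert (Hstay : kappa ^ (n - S m) <= mprod (s + S m) (n - S m) i i) by now apply mprod_diag_ge.
    replace n with (S m + (n - S m))%nat by (unfold m in *; lia).
    rewrite pow_add.
    eapply Rle_trans; [|apply (mprod_ge_via s (S m) (n - S m) i i j); auto].
    rewrite Rmult_comm. apply Rmult_le_compat; auto; left; apply pow_lt; lra.
Qed.

Hypothesis strongly_connected : forall i j, (i < N)%nat -> (j < N)%nat -> reach Ed i j.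

Lemma mprod_ge_pow_eventually : exists W, (1 <= W)%nat /\
  forall n s i j, (W <= n)%nat -> (i < N)%nat -> (j < N)%nat -> kappa ^ n <= mprod s n i j.
Proof.
  assert (exists w, forall j, (j < N)%nat -> forall i, (i < N)%nat ->
     forall s n, (w <= n)%nat -> kappa ^ n <= mprod s n i j) as [w Hw].
  { apply exists_uniform_nat.
    - intros j w w' H Hle i Hi s n Hn. apply H; auto; lia.
    - intros j Hj. apply exists_uniform_nat.
      + intros i w w' H Hle s n Hn. apply H; auto; lia.
      + intros i Hi. apply mprod_ge_pow_of_reach; auto. }
  exists (S w). split; [lia|]. intros. apply Hw; auto; lia.
Qed.

End StochasticProducts.

(** * Push-sum consensus *)

Lemma Rabs_fsum_mul_le n (c x : nat -> R) K : (forall j, (j < n)%nat -> Rabs (c j) <= K) ->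
  Rabs (fsum n (fun j => c j * x j)) <= K * fsum n (fun j => Rabs (x j)).
Proof.
  intros H. eapply Rle_trans; [apply fsum_abs|]. rewrite <- fsum_scal_l. apply fsum_le.
  intros j Hj. rewrite Rabs_mult. apply Rmult_le_compat_r; [apply Rabs_pos|auto].
Qed.

Lemma convex_comb_between n (v w : nat -> R) lo hi :
  (forall q, (q < n)%nat -> lo <= v q <= hi) -> (forall q, (q < n)%nat -> 0 <= w q) ->
  fsum n w = 1 -> lo <= fsum n (fun q => v q * w q) <= hi.
Proof.
  intros Hv Hw Hs. split.
  - replace lo with (fsum n (fun q => lo * w q)) by (rewrite fsum_scal_l, Hs; ring).
    apply fsum_le; intros q Hq; specialize (Hv q Hq); specialize (Hw q Hq); nra.
  - replace hi with (fsum n (fun q => hi * w q)) by (rewrite fsum_scal_l, Hs; ring).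
    apply fsum_le; intros q Hq; specialize (Hv q Hq); specialize (Hw q Hq); nra.
Qed.

Definition mix_rate (N : nat) (kappa : R) (W : nat) : R := 1 - INR N * kappa ^ W.

Section PushSum.

Variable N : nat.
Hypothesis N_pos : (1 <= N)%nat.
Variable A : nat -> nat -> nat -> R.
Hypothesis A_ge0 : forall t i j, (i < N)%nat -> (j < N)%nat -> 0 <= A t i j.
Hypothesis A_col : forall t j, (j < N)%nat -> fsum N (fun i => A t i j) = 1.
Variable kappa : R.
Hypothesis kappa_pos : 0 < kappa.
Hypothesis A_diag : forall t i, (i < N)%nat -> kappa <= A t i i.
Variable W : nat.
Hypothesis W_pos : (1 <= W)%nat.
Hypothesis mprod_window : forall s i j, (i < N)%nat -> (j < N)%nat -> kappa ^ W <= mprod N A s W i j.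

Local Notation P := (mprod N A).
Local Notation kern := (gkernel (mix_rate N kappa W) W).

Lemma mix_rate_bounds : 0 <= mix_rate N kappa W < 1.
Proof.
  assert (1 <= INR N) by (apply (le_INR 1); lia).
  assert (0 < kappa ^ W) by (apply pow_lt; lra).
  assert (INR N * kappa ^ W <= 1).
  { rewrite <- (mprod_col N A A_col 0 W 0), <- fsum_const by lia.
    apply fsum_le. intros; apply mprod_window; lia. }
  unfold mix_rate. nra.
Qed.

Lemma mprod_row_spread k : forall s n i, (k * W <= n)%nat -> (i < N)%nat -> exists lo,
  forall j, (j < N)%nat -> lo <= P s n i j <= lo + mix_rate N kappa W ^ k.
Proof.
  induction k as [|k IH]; intros s n i Hn Hi.
  - exists 0. intros j Hj. simpl. split; [now apply mprod_ge0|].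
    pose proof (mprod_le1 N A A_ge0 A_col s n i j Hi Hj); lra.
  - destruct (IH (s + W)%nat (n - W)%nat i) as [lo Hlo]; auto; [simpl in Hn; lia|].
    exists (lo + kappa ^ W * fsum N (fun q => P (s + W) (n - W) i q - lo)).
    intros j Hj. replace (P s n i j) with (P s (W + (n - W)) i j) by (f_equal; simpl in Hn; lia).
    rewrite mprod_add by auto.
    destruct (weighted_avg_window N (fun q => P (s + W) (n - W) i q) (fun q => P s W q j)
      lo (mix_rate N kappa W ^ k) (kappa ^ W) Hlo (fun q Hq => mprod_window s q j Hq Hj)
      (mprod_col N A A_col s W j Hj)) as [H1 H2].
    split; auto. eapply Rle_trans; [apply H2|]. simpl. unfold mix_rate at 2. lra.
Qed.

Variable phi : nat -> nat -> R.
Hypothesis phi0 : forall i, (i < N)%nat -> phi O i = 1.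
Hypothesis phiS : forall t i, (i < N)%nat -> phi (S t) i = fsum N (fun j => A t i j * phi t j).

Lemma phi_mprod t i : (i < N)%nat -> phi t i = fsum N (fun j => P 0 t i j).
Proof.
  revert i; induction t as [|t IH]; intros i Hi.
  - rewrite phi0 by auto. symmetry. simpl.
    rewrite (fsum_ext N _ (fun j => kron i j * 1)) by (intros; ring). now rewrite fsum_kron_l.
  - rewrite phiS by auto. simpl.
    rewrite (fsum_ext N _ (fun j => fsum N (fun q => A t i j * P 0 t j q)))
      by (intros j Hj; rewrite IH, fsum_scal_l; auto).
    apply fsum_comm.
Qed.

Lemma phi_ge0 t i : (i < N)%nat -> 0 <= phi t i.
Proof. intros. rewrite phi_mprod by auto. apply fsum_ge0; intros; now apply mprod_ge0. Qed.

Lemma phi_sum t : fsum N (fun i => phi t i) = INR N.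
Proof.
  rewrite (fsum_ext N _ (fun i => fsum N (fun j => P 0 t i j))) by (intros; now apply phi_mprod).
  rewrite fsum_comm, (fsum_ext N _ (fun _ => 1)), fsum_const; [ring|].
  intros; now apply mprod_col.
Qed.

Lemma phi_le_N t i : (i < N)%nat -> phi t i <= INR N.
Proof.
  intros Hi. rewrite <- (phi_sum t).
  apply (fsum_term_le N (fun i => phi t i)); auto. intros; now apply phi_ge0.
Qed.

Lemma phi_shift s t i : (s <= t)%nat -> (i < N)%nat ->
  phi t i = fsum N (fun q => P s (t - s) i q * phi s q).
Proof.
  intros Hst Hi. rewrite phi_mprod by auto.
  rewrite (fsum_ext N _ (fun j => fsum N (fun q => P (0 + s) (t - s) i q * P 0 s q j))).
  2:{ intros j Hj. replace t with (s + (t - s))%nat at 1 by lia. now apply mprod_add. }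
  rewrite fsum_comm. apply fsum_ext. intros q Hq. now rewrite phi_mprod, <- fsum_scal_l.
Qed.

(* [phi t i / N] is a weighted average of row [i] of [P s (t - s)], so lies in its spread. *)
Lemma mprod_near_phi s t i j : (s <= t)%nat -> (i < N)%nat -> (j < N)%nat ->
  Rabs (P s (t - s) i j - phi t i / INR N) <= kern (t - s).
Proof.
  intros Hst Hi Hj. assert (HNp : 0 < INR N) by (apply lt_0_INR; lia).
  destruct (mprod_row_spread ((t - s) / W) s (t - s) i) as [lo Hlo]; auto.
  { rewrite Nat.mul_comm. apply Nat.Div0.mul_div_le. }
  assert (lo <= phi t i / INR N <= lo + mix_rate N kappa W ^ ((t - s) / W)).
  { rewrite phi_shift with (s := s) by auto. unfold Rdiv. rewrite <- fsum_scal_r.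
    rewrite (fsum_ext N _ (fun q => P s (t - s) i q * (phi s q * / INR N))) by (intros; ring).
    apply convex_comb_between; auto.
    - intros; apply Rmult_le_pos; [now apply phi_ge0|left; now apply Rinv_0_lt_compat].
    - rewrite fsum_scal_r, phi_sum. field. lra. }
  specialize (Hlo j Hj). unfold gkernel. apply Rabs_le. lra.
Qed.

Lemma phi_ge_window t i : (i < N)%nat -> kappa ^ W <= phi t i.
Proof.
  intros Hi. assert (Hk1 : kappa <= 1) by (apply (kappa_le1 N A A_ge0 A_col kappa A_diag); lia).
  assert (0 < kappa ^ W) by (apply pow_lt; lra).
  destruct (Compare_dec.le_lt_dec W t).
  - rewrite (phi_shift (t - W) t i) by (auto; lia). replace (t - (t - W))%nat with W by lia.
    apply Rle_trans with (fsum N (fun q => kappa ^ W * phi (t - W) q)).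
    + rewrite fsum_scal_l, phi_sum. assert (1 <= INR N) by (apply (le_INR 1); lia). nra.
    + apply fsum_le. intros q Hq. apply Rmult_le_compat_r; [now apply phi_ge0|auto].
  - rewrite phi_mprod by auto. apply Rle_trans with (P 0 t i i).
    + apply Rle_trans with (kappa ^ t); [|now apply mprod_diag_ge].
      replace W with (t + (W - t))%nat by lia. rewrite pow_add.
      assert (0 < kappa ^ t) by (apply pow_lt; lra).
      assert (kappa ^ (W - t) <= 1) by (rewrite <- (pow1 (W - t)); apply pow_incr; lra). nra.
    + apply (fsum_term_le N (fun j => P 0 t i j)); auto. intros; now apply mprod_ge0.
Qed.

Variables u e : nat -> nat -> R.
Hypothesis uS : forall t i, (i < N)%nat -> u (S t) i = fsum N (fun j => A t i j * (u t j + e t j)).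

Lemma u_sum_step t : fsum N (fun i => u (S t) i) = fsum N (fun j => u t j) + fsum N (fun j => e t j).
Proof.
  rewrite (fsum_ext N _ (fun i => fsum N (fun j => A t i j * (u t j + e t j)))) by (intros; now apply uS).
  rewrite fsum_comm, (fsum_ext N _ (fun j => u t j + e t j)); [apply fsum_add|].
  intros j Hj. rewrite fsum_scal_r, A_col; auto; ring.
Qed.

Lemma u_sum t : fsum N (fun i => u t i) = fsum N (fun j => u O j) + fsum t (fun s => fsum N (fun j => e s j)).
Proof. induction t as [|t IH]; simpl; [lra|]. rewrite u_sum_step, IH. ring. Qed.

Lemma u_mprod t i : (i < N)%nat -> u t i =
  fsum N (fun j => P 0 t i j * u O j) + fsum t (fun s => fsum N (fun j => P s (t - s) i j * e s j)).
Proof.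
  revert i; induction t as [|t IH]; intros i Hi.
  - simpl. rewrite fsum_kron_l; auto. lra.
  - rewrite uS by auto.
    rewrite (fsum_ext N _ (fun j => A t i j * fsum N (fun q => P 0 t j q * u O q)
       + A t i j * fsum t (fun s => fsum N (fun q => P s (t - s) j q * e s q)) + A t i j * e t j))
      by (intros j Hj; rewrite IH by auto; ring).
    rewrite !fsum_add. cbn [fsum]. rewrite Rplus_assoc. f_equal; [|f_equal].
    + simpl. rewrite (fsum_ext N _ (fun j => fsum N (fun q => A t i j * P 0 t j q * u O q))).
      2:{ intros j Hj. rewrite <- fsum_scal_l. apply fsum_ext; intros; ring. }
      rewrite fsum_comm. apply fsum_ext. intros q Hq. now rewrite fsum_scal_r.
    + rewrite (fsum_ext N _ (fun j => fsum t (fun s => fsum N (fun q => A t i j * P s (t - s) j q * e s q)))).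
      2:{ intros j Hj. rewrite <- fsum_scal_l. apply fsum_ext; intros.
          rewrite <- fsum_scal_l. apply fsum_ext; intros; ring. }
      rewrite fsum_comm. apply fsum_ext. intros s Hs.
      rewrite fsum_comm. apply fsum_ext. intros q Hq.
      replace (S t - s)%nat with (S (t - s)) by lia. simpl.
      replace (s + (t - s))%nat with t by lia. now rewrite fsum_scal_r.
    + apply fsum_ext. intros j Hj. replace (S t - t)%nat with 1%nat by lia.
      now rewrite mprod_one.
Qed.

Lemma pushsum_dev t i : (i < N)%nat ->
  Rabs (u t i - phi t i * fsum N (fun j => u t j) / INR N) <=
  kern t * fsum N (fun j => Rabs (u O j))
  + conv kern (fun s => fsum N (fun j => Rabs (e s j))) t.
Proof.
  intros Hi. assert (HNp : 0 < INR N) by (apply lt_0_INR; lia).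
  assert (Hcentered : forall n (p x : nat -> R),
    fsum n (fun j => (p j - phi t i / INR N) * x j)
    = fsum n (fun j => p j * x j) - phi t i / INR N * fsum n (fun j => x j)).
  { intros. rewrite <- fsum_scal_l, <- fsum_sub. apply fsum_ext; intros; ring. }
  rewrite u_sum, u_mprod by auto.
  replace (fsum N (fun j => P 0 t i j * u O j) + fsum t (fun s => fsum N (fun j => P s (t - s) i j * e s j))
     - phi t i * (fsum N (fun j => u O j) + fsum t (fun s => fsum N (fun j => e s j))) / INR N)
   with (fsum N (fun j => (P 0 t i j - phi t i / INR N) * u O j) +
         fsum t (fun s => fsum N (fun j => (P s (t - s) i j - phi t i / INR N) * e s j))).
  2:{ rewrite Hcentered, (fsum_ext t _ (fun s => fsum N (fun j => P s (t - s) i j * e s j)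
        - phi t i / INR N * fsum N (fun j => e s j))) by (intros; apply Hcentered).
      rewrite fsum_sub, fsum_scal_l. field. lra. }
  eapply Rle_trans; [apply Rabs_triang|]. apply Rplus_le_compat.
  - apply Rabs_fsum_mul_le. intros j Hj.
    pose proof (mprod_near_phi 0 t i j) as H. rewrite Nat.sub_0_r in H. apply H; auto; lia.
  - eapply Rle_trans; [apply fsum_abs|]. apply fsum_le. intros s Hs.
    apply Rabs_fsum_mul_le. intros j Hj. apply mprod_near_phi; auto; lia.
Qed.

Lemma pushsum_ratio_dev t i : (i < N)%nat ->
  Rabs (u t i / phi t i - fsum N (fun j => u t j) / INR N) <=
  (kern t * fsum N (fun j => Rabs (u O j))
   + conv kern (fun s => fsum N (fun j => Rabs (e s j))) t) / kappa ^ W.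
Proof.
  intros Hi. pose proof (pushsum_dev t i Hi) as H. pose proof (phi_ge_window t i Hi) as Hphi.
  assert (0 < kappa ^ W) by (apply pow_lt; lra).
  replace (u t i / phi t i - fsum N (fun j => u t j) / INR N)
    with ((u t i - phi t i * fsum N (fun j => u t j) / INR N) / phi t i)
    by (field; split; [apply not_0_INR; lia|lra]).
  unfold Rdiv. rewrite Rabs_mult, Rabs_inv, (Rabs_right (phi t i)) by lra.
  apply Rmult_le_compat; [apply Rabs_pos|left; apply Rinv_0_lt_compat; lra|auto|].
  now apply Rinv_le_contravar.
Qed.

End PushSum.

(** * Subgradients *)

Lemma exists_between (Lo Up : R -> Prop) : (exists u, Lo u) -> (exists w, Up w) ->
  (forall u w, Lo u -> Up w -> u <= w) -> exists c, (forall u, Lo u -> u <= c) /\ (forall w, Up w -> c <= w).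
Proof.
  intros [u0 Hu0] [w0 Hw0] Hsep.
  destruct (completeness Lo) as [c [Hc1 Hc2]]; [exists w0; intros u Hu; now apply Hsep|now exists u0|].
  exists c. split; [exact Hc1|]. intros w Hw. apply Hc2. intros u Hu. now apply Hsep.
Qed.

(* Hahn-Banach in R^d: a sublinear [q] (which only sees the first [d] coordinates)
   has a linear minorant that is exact at a given [v0]. *)
Section LinearMinorant.

Variable d : nat.
Variable q : vecd -> R.
Hypothesis q_ext : forall e e', (forall k, (k < d)%nat -> e k = e' k) -> q e = q e'.
Hypothesis q_subadd : forall e1 e2, q (fun k => e1 k + e2 k) <= q e1 + q e2.
Hypothesis q_homog : forall lam e, 0 < lam -> q (fun k => lam * e k) = lam * q e.
Variable v0 : vecd.

Lemma q_zero : q (fun _ => 0) = 0.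
Proof.
  pose proof (q_homog 2 (fun _ => 0)) as H. simpl in H.
  rewrite (q_ext (fun _ => 2 * 0) (fun _ => 0)) in H by (intros; ring). lra.
Qed.

Definition unitv (m : nat) : vecd := fun k => if Nat.eqb k m then 1 else 0.
Definition supp_below (m : nat) (x : vecd) := forall k, (m <= k)%nat -> x k = 0.

Definition dominated_upto (m : nat) (g : vecd) := forall al x, supp_below m x ->
  al * q v0 + fsum m (fun k => g k * x k) <= q (fun k => al * v0 k + x k).

Lemma dominated_upto_0 : dominated_upto 0 (fun _ => 0).
Proof.
  intros al x Hx. simpl.
  rewrite (q_ext (fun k => al * v0 k + x k) (fun k => al * v0 k)) by (intros; rewrite Hx; lia || ring).
  destruct (Rtotal_order al 0) as [Hl|[->|Hg]].
  - pose proof (q_subadd (fun k => al * v0 k) (fun k => - al * v0 k)) as H. cbv beta in H.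
    rewrite (q_ext (fun k => al * v0 k + - al * v0 k) (fun _ => 0)), q_zero, (q_homog (- al) v0) in H
      by (intros; ring || lra).
    lra.
  - rewrite (q_ext (fun k => 0 * v0 k) (fun _ => 0)), q_zero by (intros; ring). lra.
  - rewrite q_homog by lra. lra.
Qed.

Section Extension.

Variable m : nat.
Variable g : vecd.
Hypothesis g_dom : dominated_upto m g.

Let L al x := al * q v0 + fsum m (fun k => g k * x k).

Lemma L_scal al x s : 0 < s -> L (al / s) (fun k => x k / s) = L al x / s.
Proof.
  intros Hs. unfold L. unfold Rdiv. rewrite Rmult_plus_distr_r, <- fsum_scal_r. f_equal; [ring|].
  apply fsum_ext; intros; ring.
Qed.

Lemma extension_sep al1 x1 al2 x2 : supp_below m x1 -> supp_below m x2 ->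
  L al1 x1 - q (fun k => al1 * v0 k + x1 k - unitv m k)
  <= q (fun k => al2 * v0 k + x2 k + unitv m k) - L al2 x2.
Proof.
  intros Hx1 Hx2. unfold L.
  assert (supp_below m (fun k => x1 k + x2 k)) by (intros k Hk; rewrite Hx1, Hx2; auto; lra).
  pose proof (g_dom (al1 + al2) (fun k => x1 k + x2 k) H) as Hd. cbv beta in Hd.
  rewrite (fsum_ext m _ (fun k => g k * x1 k + g k * x2 k)), fsum_add in Hd by (intros; ring).
  pose proof (q_subadd (fun k => al1 * v0 k + x1 k - unitv m k) (fun k => al2 * v0 k + x2 k + unitv m k)) as Hs.
  cbv beta in Hs. rewrite (q_ext _ (fun k => (al1 + al2) * v0 k + (x1 k + x2 k))) in Hs by (intros; ring).
  lra.
Qed.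

(* For [t > 0] rescale by [t], for [t = -s < 0] by [s], to reduce to the two defining bounds of [c]. *)
Lemma extension_pos c al x t : supp_below m x -> 0 < t ->
  c <= q (fun k => al / t * v0 k + x k / t + unitv m k) - L (al / t) (fun k => x k / t) ->
  L al x + t * c <= q (fun k => al * v0 k + x k + t * unitv m k).
Proof.
  intros Hx Ht Hc. rewrite L_scal in Hc by auto.
  rewrite (q_ext _ (fun k => t * (al / t * v0 k + x k / t + unitv m k))), q_homog by (intros; field || lra; lra).
  apply (Rmult_le_compat_l t) in Hc; [|lra].
  replace (t * (q (fun k => al / t * v0 k + x k / t + unitv m k) - L al x / t))
    with (t * q (fun k => al / t * v0 k + x k / t + unitv m k) - L al x) in Hc by (field; lra).
  lra.
Qed.

Lemma extension_neg c al x s : supp_below m x -> 0 < s ->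
  L (al / s) (fun k => x k / s) - q (fun k => al / s * v0 k + x k / s - unitv m k) <= c ->
  L al x + - s * c <= q (fun k => al * v0 k + x k + - s * unitv m k).
Proof.
  intros Hx Hs Hc. rewrite L_scal in Hc by auto.
  rewrite (q_ext _ (fun k => s * (al / s * v0 k + x k / s - unitv m k))), q_homog by (intros; field || lra; lra).
  apply (Rmult_le_compat_l s) in Hc; [|lra].
  replace (s * (L al x / s - q (fun k => al / s * v0 k + x k / s - unitv m k)))
    with (L al x - s * q (fun k => al / s * v0 k + x k / s - unitv m k)) in Hc by (field; lra).
  lra.
Qed.

Lemma dominated_extend : exists c, dominated_upto (S m) (fun k => if Nat.eqb k m then c else g k).
Proof.
  set (Lo := fun u => exists al x, supp_below m x /\ u = L al x - q (fun k => al * v0 k + x k - unitv m k)).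
  set (Up := fun w => exists al x, supp_below m x /\ w = q (fun k => al * v0 k + x k + unitv m k) - L al x).
  assert (Hx0 : supp_below m (fun _ => 0)) by (intros k _; auto).
  destruct (exists_between Lo Up) as [c [HLo HUp]].
  - eexists; exists 0, (fun _ => 0); split; [exact Hx0|reflexivity].
  - eexists; exists 0, (fun _ => 0); split; [exact Hx0|reflexivity].
  - intros u w [a1 [x1 [Hx1 ->]]] [a2 [x2 [Hx2 ->]]]. now apply extension_sep.
  - exists c. intros al x Hx. simpl. rewrite Nat.eqb_refl.
    set (x' := fun k => if Nat.eqb k m then 0 else x k).
    assert (Hx' : supp_below m x')
      by (intros k Hk; unfold x'; destruct (Nat.eqb_spec k m); auto; apply Hx; lia).
    rewrite (fsum_ext m _ (fun k => g k * x' k))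
      by (intros k Hk; unfold x'; destruct (Nat.eqb_spec k m); [lia|auto]).
    rewrite <- Rplus_assoc. change (L al x' + c * x m <= q (fun k => al * v0 k + x k)).
    rewrite (q_ext _ (fun k => al * v0 k + x' k + x m * unitv m k))
      by (intros k Hk; unfold x', unitv; destruct (Nat.eqb_spec k m); subst; ring).
    rewrite (Rmult_comm c).
    destruct (Rtotal_order (x m) 0) as [Ht|[Ht|Ht]].
    + replace (x m) with (- (- x m)) by ring. apply extension_neg; [auto|lra|].
      apply HLo. exists (al / - x m), (fun k => x' k / - x m). split; [|reflexivity].
      intros k Hk. rewrite Hx'; auto. unfold Rdiv; ring.
    + rewrite Ht, Rmult_0_l, Rplus_0_r.
      rewrite (q_ext _ (fun k => al * v0 k + x' k)) by (intros; ring). now apply g_dom.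
    + apply extension_pos; auto. apply HUp. exists (al / x m), (fun k => x' k / x m).
      split; [|reflexivity]. intros k Hk. rewrite Hx'; auto. unfold Rdiv; ring.
Qed.

End Extension.

Lemma exists_linear_minorant : exists g : vecd, (forall e, ipd d g e <= q e) /\ q v0 <= ipd d g v0.
Proof.
  assert (Hall : forall m, exists g, dominated_upto m g).
  { induction m as [|m [g Hg]]; [exists (fun _ => 0); apply dominated_upto_0|].
    destruct (dominated_extend m g Hg) as [c Hc]. eexists; exact Hc. }
  destruct (Hall d) as [g Hg]. exists g.
  set (cut := fun e : vecd => fun k => if Nat.ltb k d then e k else 0).
  assert (Hcut : forall e, supp_below d (cut e))
    by (intros e k Hk; unfold cut; destruct (Nat.ltb_spec k d); auto; lia).
  assert (Hcut_eq : forall e k, (k < d)%nat -> cut e k = e k)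
    by (intros e k Hk; unfold cut; destruct (Nat.ltb_spec k d); auto; lia).
  split.
  - intros e. pose proof (Hg 0 (cut e) (Hcut e)) as H.
    rewrite (q_ext (fun k => 0 * v0 k + cut e k) e), (fsum_ext d _ (fun k => g k * e k)) in H
      by (intros k Hk; rewrite Hcut_eq; auto; ring).
    unfold ipd. lra.
  - pose proof (Hg 1 (cut (fun k => - v0 k)) (Hcut _)) as H.
    rewrite (q_ext (fun k => 1 * v0 k + cut (fun k => - v0 k) k) (fun _ => 0)), q_zero, (fsum_ext d _ (fun k => g k * - v0 k)) in H
      by (intros k Hk; rewrite Hcut_eq; auto; ring).
    fold (ipd d g (fun k => - v0 k)) in H. rewrite ipd_opp_r in H. lra.
Qed.

End LinearMinorant.

Definition is_glb (E : R -> Prop) (m : R) :=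
  (forall x, E x -> m <= x) /\ (forall b, (forall x, E x -> b <= x) -> b <= m).

Definition Inf (E : R -> Prop) : R := epsilon (inhabits 0) (is_glb E).

Lemma Inf_spec E : (exists x, E x) -> (exists b, forall x, E x -> b <= x) -> is_glb E (Inf E).
Proof.
  intros [x0 Hx0] [b Hb]. unfold Inf. apply epsilon_spec.
  destruct (completeness (fun y => E (- y))) as [m [Hm1 Hm2]].
  { exists (- b). intros y Hy. specialize (Hb _ Hy). lra. }
  { exists (- x0). now rewrite Ropp_involutive. }
  exists (- m). split.
  - intros x Hx. assert (- x <= m) by (apply Hm1; now rewrite Ropp_involutive). lra.
  - intros b' Hb'. assert (m <= - b') by (apply Hm2; intros y Hy; specialize (Hb' _ Hy); lra). lra.
Qed.

Lemma le_glb_add E1 E2 m1 m2 x : is_glb E1 m1 -> is_glb E2 m2 ->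
  (forall u v, E1 u -> E2 v -> x <= u + v) -> x <= m1 + m2.
Proof.
  intros [_ H1] [_ H2] H.
  assert (forall v, E2 v -> x - v <= m1) by (intros v Hv; apply H1; intros u Hu; specialize (H u v Hu Hv); lra).
  assert (x - m1 <= m2) by (apply H2; intros v Hv; specialize (H0 v Hv); lra). lra.
Qed.

Lemma le_of_le_plus_eps x y K : 0 <= K -> (forall eps, 0 < eps -> y - eps * K <= x) -> y <= x.
Proof.
  intros HK H. destruct (Rle_dec y x) as [|Hyx]; auto. exfalso.
  assert (He : 0 < (y - x) / (2 * (K + 1))) by (apply Rdiv_lt_0_compat; lra).
  specialize (H _ He).
  assert ((y - x) / (2 * (K + 1)) * K <= (y - x) / 2).
  { apply Rle_trans with ((y - x) / (2 * (K + 1)) * (K + 1)); [apply Rmult_le_compat_l; lra|].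
    right; field; lra. }
  lra.
Qed.

Section DirectionalDerivative.

Variable d : nat.
Variable r : vecd -> R.
Hypothesis r_cvx : strongly_convex_on d (fun _ => True) 0 r.
Variable a : vecd.
(* [r] may depend on coordinates [>= d]; along them [a] must be minimal. *)
Hypothesis r_fiber_min : forall w, (forall k, (k < d)%nat -> w k = a k) -> r a <= r w.

Lemma r_convex_comb th z u : 0 <= th <= 1 -> r (combd th z u) <= th * r z + (1 - th) * r u.
Proof. intros H. pose proof (r_cvx z u th I I H). nra. Qed.

Definition ddq (w : vecd) (th : R) := (r (fun k => a k + th * w k) - r a) / th.

Lemma ddq_mono w t1 t2 : 0 < t1 -> t1 <= t2 -> ddq w t1 <= ddq w t2.
Proof.
  intros H1 H2. unfold ddq.
  replace (fun k => a k + t1 * w k) with (combd (t1 / t2) (fun k => a k + t2 * w k) a)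
    by (apply functional_extensionality; intros k; unfold combd; field; lra).
  assert (0 <= t1 / t2 <= 1).
  { split; [apply Rlt_le, Rdiv_lt_0_compat; lra|].
    apply Rmult_le_reg_r with t2; [lra|]. unfold Rdiv. rewrite Rmult_assoc, Rinv_l; lra. }
  pose proof (r_convex_comb (t1 / t2) (fun k => a k + t2 * w k) a H) as Hc.
  unfold Rdiv at 1 3. apply Rmult_le_reg_l with t1; auto.
  replace (t1 * ((r (combd (t1 / t2) (fun k => a k + t2 * w k) a) - r a) * / t1))
    with (r (combd (t1 / t2) (fun k => a k + t2 * w k) a) - r a) by (field; lra).
  replace (t1 * ((r (fun k => a k + t2 * w k) - r a) * / t2))
    with (t1 / t2 * (r (fun k => a k + t2 * w k) - r a)) by (field; lra).
  lra.
Qed.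

Lemma ddq_opposite_ge0 w w' t1 t2 : (forall k, (k < d)%nat -> w k + w' k = 0) ->
  0 < t1 -> 0 < t2 -> 0 <= ddq w t1 + ddq w' t2.
Proof.
  intros Hw H1 H2. set (t := Rmin t1 t2).
  assert (Ht : 0 < t) by (unfold t; apply Rmin_glb_lt; lra).
  assert (ddq w t <= ddq w t1) by (apply ddq_mono; auto; apply Rmin_l).
  assert (ddq w' t <= ddq w' t2) by (apply ddq_mono; auto; apply Rmin_r).
  assert (Hm : r a <= r (combd (1/2) (fun k => a k + t * w k) (fun k => a k + t * w' k))).
  { apply r_fiber_min. intros k Hk. unfold combd. specialize (Hw k Hk).
    replace (1 / 2 * (a k + t * w k) + (1 - 1 / 2) * (a k + t * w' k)) with (a k + t / 2 * (w k + w' k))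
      by field.
    rewrite Hw. ring. }
  pose proof (r_convex_comb (1/2) (fun k => a k + t * w k) (fun k => a k + t * w' k) ltac:(lra)).
  assert (0 <= ddq w t + ddq w' t).
  { unfold ddq.
    replace ((r (fun k => a k + t * w k) - r a) / t + (r (fun k => a k + t * w' k) - r a) / t)
      with ((r (fun k => a k + t * w k) + r (fun k => a k + t * w' k) - 2 * r a) / t) by (field; lra).
    apply Rmult_le_pos; [lra|]. left; now apply Rinv_0_lt_compat. }
  lra.
Qed.

Definition ddq_set (e : vecd) (v : R) :=
  exists w th, (forall k, (k < d)%nat -> w k = e k) /\ 0 < th <= 1 /\ v = ddq w th.

Definition dirder (e : vecd) := Inf (ddq_set e).

Lemma dirder_glb e : is_glb (ddq_set e) (dirder e).
Proof.
  apply Inf_spec.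
  - exists (ddq e 1), e, 1. repeat split; auto; lra.
  - exists (- ddq (fun k => - e k) 1). intros v [w [th [Hw [Hth ->]]]].
    assert (0 <= ddq w th + ddq (fun k => - e k) 1)
      by (apply ddq_opposite_ge0; [intros k Hk; rewrite Hw; auto; ring|lra|lra]).
    lra.
Qed.

Lemma dirder_le e w th : (forall k, (k < d)%nat -> w k = e k) -> 0 < th <= 1 -> dirder e <= ddq w th.
Proof. intros. apply (proj1 (dirder_glb e)). now exists w, th. Qed.

Lemma dirder_ext e e' : (forall k, (k < d)%nat -> e k = e' k) -> dirder e = dirder e'.
Proof.
  intros H. unfold dirder. f_equal. apply functional_extensionality. intros v.
  apply propositional_extensionality.
  split; intros [w [th [Hw Ht]]]; exists w, th; split; auto; intros k Hk; rewrite Hw, ?H; auto.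
Qed.

Lemma ddq_add w1 w2 t : 0 < t -> ddq (fun k => w1 k + w2 k) t <= ddq w1 (2 * t) + ddq w2 (2 * t).
Proof.
  intros Ht. unfold ddq.
  replace (fun k => a k + t * (w1 k + w2 k))
    with (combd (1/2) (fun k => a k + 2 * t * w1 k) (fun k => a k + 2 * t * w2 k))
    by (apply functional_extensionality; intros k; unfold combd; field).
  pose proof (r_convex_comb (1/2) (fun k => a k + 2 * t * w1 k) (fun k => a k + 2 * t * w2 k) ltac:(lra)).
  apply Rmult_le_reg_l with (2 * t); [lra|].
  set (c := combd (1 / 2) (fun k => a k + 2 * t * w1 k) (fun k => a k + 2 * t * w2 k)) in *.
  set (r1 := r (fun k => a k + 2 * t * w1 k)) in *. set (r2 := r (fun k => a k + 2 * t * w2 k)) in *.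
  replace (2 * t * ((r c - r a) / t)) with (2 * (r c - r a)) by (field; lra).
  replace (2 * t * ((r1 - r a) / (2 * t) + (r2 - r a) / (2 * t))) with (r1 - r a + (r2 - r a))
    by (field; lra).
  lra.
Qed.

Lemma dirder_subadd e1 e2 : dirder (fun k => e1 k + e2 k) <= dirder e1 + dirder e2.
Proof.
  apply (le_glb_add (ddq_set e1) (ddq_set e2)); try apply dirder_glb.
  intros u v [w1 [t1 [Hw1 [Ht1 ->]]]] [w2 [t2 [Hw2 [Ht2 ->]]]].
  set (t := Rmin t1 t2 / 2).
  assert (0 < Rmin t1 t2) by (apply Rmin_glb_lt; lra).
  pose proof (Rmin_l t1 t2). pose proof (Rmin_r t1 t2).
  eapply Rle_trans; [apply (dirder_le _ (fun k => w1 k + w2 k) t)|].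
  - intros k Hk; rewrite Hw1, Hw2; auto.
  - unfold t; lra.
  - eapply Rle_trans; [apply ddq_add; unfold t; lra|].
    apply Rplus_le_compat; apply ddq_mono; unfold t; lra.
Qed.

Lemma ddq_scal w lam t : 0 < lam -> 0 < t -> ddq (fun k => lam * w k) t = lam * ddq w (lam * t).
Proof.
  intros Hl Ht. unfold ddq.
  replace (fun k => a k + t * (lam * w k)) with (fun k => a k + lam * t * w k)
    by (apply functional_extensionality; intros; ring).
  field. lra.
Qed.

Lemma dirder_scal_le lam e : 0 < lam -> dirder (fun k => lam * e k) <= lam * dirder e.
Proof.
  intros Hl.
  assert (Hlow : forall v, ddq_set e v -> dirder (fun k => lam * e k) / lam <= v).
  { intros v [w [th [Hw [Ht ->]]]]. apply Rmult_le_reg_l with lam; auto.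
    replace (lam * (dirder (fun k => lam * e k) / lam)) with (dirder (fun k => lam * e k)) by (field; lra).
    destruct (Rle_dec 1 lam).
    - replace (lam * ddq w th) with (ddq (fun k => lam * w k) (th / lam))
        by (rewrite ddq_scal by (try apply Rdiv_lt_0_compat; lra); do 2 f_equal; field; lra).
      apply dirder_le; [intros k Hk; rewrite Hw; auto|split; [apply Rdiv_lt_0_compat; lra|]].
      apply Rmult_le_reg_l with lam; [lra|]. replace (lam * (th / lam)) with th by (field; lra). nra.
    - eapply Rle_trans; [apply (dirder_le _ (fun k => lam * w k) th); [intros k Hk; rewrite Hw; auto|lra]|].
      rewrite ddq_scal by lra. apply Rmult_le_compat_l; [lra|]. apply ddq_mono; nra. }
  pose proof (proj2 (dirder_glb e) _ Hlow). apply Rmult_le_reg_l with (/ lam); [now apply Rinv_0_lt_compat|].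
  replace (/ lam * (lam * dirder e)) with (dirder e) by (field; lra). unfold Rdiv in H. lra.
Qed.

Lemma dirder_homog lam e : 0 < lam -> dirder (fun k => lam * e k) = lam * dirder e.
Proof.
  intros Hl. apply Rle_antisym; [now apply dirder_scal_le|].
  pose proof (dirder_scal_le (/ lam) (fun k => lam * e k) ltac:(now apply Rinv_0_lt_compat)) as H.
  cbv beta in H. rewrite (dirder_ext (fun k => / lam * (lam * e k)) e) in H by (intros; field; lra).
  apply Rmult_le_reg_l with (/ lam); [now apply Rinv_0_lt_compat|].
  replace (/ lam * (lam * dirder e)) with (dirder e) by (field; lra). auto.
Qed.

Lemma exists_subgrad_dirder v0 : exists g, is_subgrad d r g a /\ dirder v0 <= ipd d g v0.
Proof.
  destruct (exists_linear_minorant d dirder dirder_ext dirder_subadd dirder_homog v0) as [g [Hg1 Hg2]].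
  exists g. split; auto. intros w.
  pose proof (Hg1 (subd w a)). pose proof (dirder_le (subd w a) (subd w a) 1 (fun k _ => eq_refl) ltac:(lra)).
  unfold ddq in H0.
  replace (fun k => a k + 1 * subd w a k) with w in H0
    by (apply functional_extensionality; intros; unfold subd; ring).
  unfold Rdiv in H0. rewrite Rinv_1, Rmult_1_r in H0. lra.
Qed.

End DirectionalDerivative.

Section StronglyConvexMinimizer.

Variable d : nat.
Variable S : vecd -> Prop.
Variable F : vecd -> R.
Variable gF : vecd -> vecd.
Variable r : vecd -> R.
Variable tau M : R.
Hypothesis tau_pos : 0 < tau.
Hypothesis S_convex : convexd S.
Hypothesis S_ext : forall z z', S z -> (forall k, (k < d)%nat -> z k = z' k) -> S z'.
Hypothesis F_grad : forall z, S z -> has_gradd_on d S F (gF z) z.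
Hypothesis F_sc : strongly_convex_on d S tau F.
Hypothesis r_cvx : strongly_convex_on d (fun _ => True) 0 r.
Hypothesis r_subgrad_bd : forall z g, S z -> is_subgrad d r g z -> normd d g <= M.
Variables c xl a : vecd.
Hypothesis S_xl : S xl.
Hypothesis S_a : S a.
Hypothesis a_min : forall z, S z ->
  F a + ipd d c (subd a xl) + r a <= F z + ipd d c (subd z xl) + r z.

Lemma subd_combd th z u k : subd (combd th z u) u k = th * subd z u k.
Proof. unfold subd, combd. ring. Qed.

Lemma grad_along_segment u z : S u -> S z -> forall eps, 0 < eps ->
  exists th0, 0 < th0 /\ forall th, 0 < th <= th0 -> th <= 1 ->
  Rabs (F (combd th z u) - F u - th * ipd d (gF u) (subd z u)) <= eps * th * normd d (subd z u).
Proof.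
  intros Hu Hz eps He. destruct (F_grad u Hu eps He) as [del [Hdel H]].
  set (D := normd d (subd z u)). assert (HD : 0 <= D) by apply normd_ge0.
  exists (del / (D + 1)). split; [apply Rdiv_lt_0_compat; lra|].
  intros th [Hth0 Hth1] Hth2.
  assert (Hn : normd d (subd (combd th z u) u) = th * D).
  { rewrite (normd_ext d _ (fun k => th * subd z u k)) by (intros; apply subd_combd).
    apply normd_scal; lra. }
  assert (Hi : ipd d (gF u) (subd (combd th z u) u) = th * ipd d (gF u) (subd z u)).
  { rewrite (ipd_ext d _ _ (fun k => th * subd z u k)) by (intros; apply subd_combd). apply ipd_scal_r. }
  rewrite <- Hi. replace (eps * th * D) with (eps * normd d (subd (combd th z u) u)) by (rewrite Hn; ring).
  apply H; [apply S_convex; auto; lra|]. rewrite Hn.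
  apply Rle_lt_trans with (del / (D + 1) * D); [apply Rmult_le_compat_r; lra|].
  apply Rlt_le_trans with (del / (D + 1) * (D + 1)); [apply Rmult_lt_compat_l; [apply Rdiv_lt_0_compat|]; lra|].
  right; field; lra.
Qed.

Lemma strongly_convex_grad_ineq u z : S u -> S z ->
  ipd d (gF u) (subd z u) + tau / 2 * (normd d (subd z u))^2 <= F z - F u.
Proof.
  intros Hu Hz. set (D := normd d (subd z u)). assert (HD : 0 <= D) by apply normd_ge0.
  apply (le_of_le_plus_eps _ _ (D + tau / 2 * D^2)); [nra|].
  intros eps He. destruct (grad_along_segment u z Hu Hz eps He) as [th0 [Hth0 Hg]].
  set (th := Rmin th0 (Rmin eps 1)).
  assert (Hth : 0 < th) by (unfold th; repeat apply Rmin_glb_lt; lra).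
  assert (Hth1 : th <= th0) by apply Rmin_l.
  assert (Hth2 : th <= eps) by (unfold th; eapply Rle_trans; [apply Rmin_r|apply Rmin_l]).
  assert (Hth3 : th <= 1) by (unfold th; eapply Rle_trans; [apply Rmin_r|apply Rmin_r]).
  specialize (Hg th (conj Hth Hth1) Hth3). fold D in Hg.
  pose proof (F_sc z u th Hz Hu (conj (Rlt_le _ _ Hth) Hth3)) as Hs. fold D in Hs.
  apply Rabs_le_inv in Hg as [Hg _].
  set (g := ipd d (gF u) (subd z u)) in *.
  assert (th * (F z - F u) >= th * (g - eps * D + tau / 2 * (1 - th) * D^2)) by nra.
  assert (F z - F u >= g - eps * D + tau / 2 * (1 - th) * D^2)
    by (apply Rle_ge, Rmult_le_reg_l with th; auto; lra).
  assert (tau / 2 * th * D^2 <= tau / 2 * eps * D^2)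
    by (apply Rmult_le_compat_r; [nra|apply Rmult_le_compat_l; lra]).
  nra.
Qed.

Lemma grad_strongly_monotone :
  tau * (normd d (subd xl a))^2 <= ipd d (fun k => gF xl k - gF a k) (subd xl a).
Proof.
  pose proof (strongly_convex_grad_ineq a xl S_a S_xl) as H1.
  pose proof (strongly_convex_grad_ineq xl a S_xl S_a) as H2.
  rewrite normd_sub_comm in H2. rewrite ipd_sub_l.
  rewrite (ipd_ext d (gF xl) (subd a xl) (fun k => - subd xl a k)), ipd_opp_r in H2
    by (intros; unfold subd; ring).
  lra.
Qed.

Lemma F_fiber z z' : S z -> S z' -> (forall k, (k < d)%nat -> z k = z' k) -> F z' = F z.
Proof.
  intros Hz Hz' He. destruct (F_grad z Hz 1 ltac:(lra)) as [del [Hdel H]].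
  assert (Hn : normd d (subd z' z) = 0) by (apply normd_eq0; intros k Hk; unfold subd; rewrite He; auto; ring).
  specialize (H z' Hz'). rewrite Hn in H. specialize (H Hdel).
  rewrite (ipd_ext d _ _ (fun _ => 0)), (ipd_ext d _ _ (fun k => 0 * 0)) in H by (intros; unfold subd; rewrite ?He; auto; ring).
  rewrite ipd_scal_r in H. apply Rabs_le_inv in H. lra.
Qed.

Lemma r_fiber_min w : (forall k, (k < d)%nat -> w k = a k) -> r a <= r w.
Proof.
  intros Hw. assert (Sw : S w) by (apply (S_ext a); auto; intros; rewrite Hw; auto).
  pose proof (a_min w Sw) as H. rewrite (F_fiber a w S_a Sw) in H by (intros; rewrite Hw; auto).
  rewrite (ipd_ext d c (subd w xl) (subd a xl)) in H by (intros k Hk; unfold subd; rewrite Hw; auto).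
  lra.
Qed.

(* first-order optimality of [a], in difference-quotient form *)
Lemma ddq_ge_optimality z th : S z -> 0 < th <= 1 ->
  - ipd d (fun k => gF a k + c k) (subd z a) <= ddq r a (subd z a) th.
Proof.
  intros Hz Hth. set (D := normd d (subd z a)). assert (HD : 0 <= D) by apply normd_ge0.
  apply (le_of_le_plus_eps _ _ D HD). intros eps He.
  destruct (grad_along_segment a z S_a Hz eps He) as [th0 [Hth0 Hg]].
  set (t := Rmin th th0).
  assert (Ht : 0 < t) by (unfold t; apply Rmin_glb_lt; lra).
  assert (Ht1 : t <= th) by apply Rmin_l. assert (Ht2 : t <= th0) by apply Rmin_r.
  eapply Rle_trans; [|apply (ddq_mono d r r_cvx a _ t th); auto].
  specialize (Hg t (conj Ht Ht2) ltac:(lra)). fold D in Hg. apply Rabs_le_inv in Hg.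
  pose proof (a_min _ (S_convex z a t Hz S_a ltac:(lra))) as Hm.
  assert (E1 : ipd d c (subd (combd t z a) xl) = ipd d c (subd a xl) + t * ipd d c (subd z a)).
  { rewrite <- ipd_scal_r, <- ipd_add_r. apply ipd_ext. intros k Hk. unfold subd, combd. ring. }
  assert (E2 : combd t z a = (fun k => a k + t * subd z a k)).
  { apply functional_extensionality; intros k; unfold combd, subd; ring. }
  rewrite E1 in Hm. rewrite E2 in Hm, Hg. rewrite ipd_add_l.
  unfold ddq. apply Rmult_le_reg_l with t; auto.
  replace (t * ((r (fun k => a k + t * subd z a k) - r a) / t))
    with (r (fun k => a k + t * subd z a k) - r a) by (field; lra).
  nra.
Qed.

(* Test optimality of [a] against a subgradient [g] of [r] at [a] that is exact in direction [xl - a]. *)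
Theorem minimizer_dist_le : tau * normd d (subd xl a) <= normd d (fun k => gF xl k + c k) + M.
Proof.
  set (v0 := subd xl a). set (D := normd d v0). assert (HD : 0 <= D) by apply normd_ge0.
  destruct (exists_subgrad_dirder d r r_cvx a r_fiber_min v0) as [g [Hsub Hg]].
  pose proof (r_subgrad_bd a g S_a Hsub) as HgM.
  assert (H1 : ipd d g v0 <= M * D).
  { pose proof (ipd_Cauchy_Schwarz d g v0) as HCS. fold D in HCS. pose proof (normd_ge0 d g). nra. }
  assert (H2 : - ipd d (fun k => gF a k + c k) v0 <= dirder d r a v0).
  { apply (proj2 (dirder_glb d r r_cvx a r_fiber_min v0)). intros v [w [th [Hw [Ht ->]]]].
    set (z := fun k => a k + w k).
    assert (Sz : S z) by (apply (S_ext xl); auto; intros k Hk; unfold z; rewrite Hw; auto; unfold v0, subd; ring).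
    replace w with (subd z a) by (apply functional_extensionality; intros; unfold z, subd; ring).
    rewrite (ipd_ext d _ v0 (subd z a)) by (intros k Hk; unfold z, subd; rewrite Hw; auto; unfold v0, subd; ring).
    now apply ddq_ge_optimality. }
  pose proof grad_strongly_monotone as Hmono. fold v0 D in Hmono.
  rewrite (ipd_ext_l d _ (fun k => (gF xl k + c k) - (gF a k + c k))), ipd_sub_l in Hmono by (intros; ring).
  pose proof (ipd_Cauchy_Schwarz d (fun k => gF xl k + c k) v0) as Hc. fold D in Hc.
  set (G := normd d (fun k => gF xl k + c k)) in *. assert (0 <= G) by apply normd_ge0.
  assert (tau * D^2 <= (G + M) * D) by nra.
  pose proof (normd_ge0 d g).
  destruct (Req_dec D 0) as [HD0|HD0]; [rewrite HD0; lra|].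
  apply Rmult_le_reg_r with D; [lra|]. nra.
Qed.

End StronglyConvexMinimizer.

(** * The algorithm *)

Lemma exists_uniform_R (Q : nat -> R -> Prop) n :
  (forall i M M', Q i M -> M <= M' -> Q i M') ->
  (forall i, (i < n)%nat -> exists M, Q i M) -> exists M, forall i, (i < n)%nat -> Q i M.
Proof.
  intros Hmono. induction n as [|n IH]; intros H; [exists 0; intros; lia|].
  destruct IH as [M HM]; [intros; apply H; lia|].
  destruct (H n) as [M' HM']; [lia|].
  exists (Rmax M M'). intros i Hi. destruct (Nat.eq_dec i n) as [->|Hin].
  - eapply Hmono; eauto; apply Rmax_r.
  - eapply Hmono; [apply HM; lia|apply Rmax_l].
Qed.

Lemma exists_pos_lower_bound (g : nat -> R) n : (forall i, (i < n)%nat -> 0 < g i) ->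
  exists m, 0 < m /\ forall i, (i < n)%nat -> m <= g i.
Proof.
  induction n as [|n IH]; intros H; [exists 1; split; intros; lra || lia|].
  destruct IH as [m [Hm Hmi]]; [intros; apply H; lia|].
  exists (Rmin m (g n)). split; [apply Rmin_glb_lt; auto; apply H; lia|].
  intros i Hi. destruct (Nat.eq_dec i n) as [->|Hin]; [apply Rmin_r|].
  eapply Rle_trans; [apply Rmin_l|apply Hmi; lia].
Qed.

Lemma convexd_fsum d (S : vecd -> Prop) :
  (forall z z', S z -> (forall k, (k < d)%nat -> z k = z' k) -> S z') -> convexd S ->
  forall n (p : nat -> vecd) (w : nat -> R) (q : vecd),
  (forall j, (j < n)%nat -> S (p j)) -> (forall j, (j < n)%nat -> 0 <= w j) -> fsum n w = 1 ->
  (forall k, (k < d)%nat -> q k = fsum n (fun j => w j * p j k)) -> S q.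
Proof.
  intros S_ext Hc n. induction n as [|n IH]; intros p w q Hp Hw Hs Hq; simpl in Hs; [lra|].
  assert (0 <= fsum n w) by (apply fsum_ge0; intros; apply Hw; lia).
  destruct (Req_dec (w n) 1) as [H1|H1].
  - assert (Hz : forall j, (j < n)%nat -> w j = 0).
    { intros j Hj. assert (0 <= w j) by (apply Hw; lia).
      assert (w j <= fsum n w) by (apply (fsum_term_le n w j); auto; intros; apply Hw; lia). lra. }
    apply (S_ext (p n)); [apply Hp; lia|]. intros k Hk. rewrite Hq by auto. simpl.
    rewrite fsum_eq0, H1; [ring|]. intros j Hj; rewrite Hz; auto; ring.
  - set (q' := fun k => fsum n (fun j => w j / (1 - w n) * p j k)).
    assert (Sq' : S q').
    { apply (IH p (fun j => w j / (1 - w n))); auto.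
      - intros j Hj. apply Rmult_le_pos; [apply Hw; lia|]. left; apply Rinv_0_lt_compat; lra.
      - unfold Rdiv. rewrite fsum_scal_r. replace (fsum n w) with (1 - w n) by lra. field. lra. }
    apply (S_ext (combd (w n) (p n) q')).
    + apply Hc; [apply Hp; lia|exact Sq'|split; [apply Hw; lia|lra]].
    + intros k Hk. rewrite Hq by auto. simpl. unfold combd, q'. rewrite <- fsum_scal_l.
      rewrite (fsum_ext n (fun j => (1 - w n) * (w j / (1 - w n) * p j k)) (fun j => w j * p j k));
        [ring|intros; field; lra].
Qed.

Section Algorithm.

Variables N B d : nat.
Variable K : nat -> vecd -> Prop.
Variable gf : nat -> vecx -> vecx.
Variable r : nat -> vecd -> R.
Variable E : nat -> nat -> Prop.
Variable sel : nat -> nat -> nat.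
Variable kappa : R.
Variable a : nat -> nat -> nat -> nat -> R.
Variable ft : nat -> nat -> vecd -> vecx -> R.
Variable gft : nat -> nat -> vecd -> vecx -> vecd.
Variable tau : nat -> R.
Variable gamma : nat -> R.
Variables x y : nat -> nat -> vecx.
Variable phi : nat -> nat -> nat -> R.
Variable xt : nat -> nat -> vecd.
Hypothesis HN : (1 <= N)%nat.
Hypothesis HKcl : forall l, (l < B)%nat -> closedd d (K l).
Hypothesis HKcv : forall l, (l < B)%nat -> convexd (K l).
Hypothesis Hr_cvx : forall l, (l < B)%nat -> strongly_convex_on d (fun _ => True) 0 (r l).
Hypothesis HE_nodes : forall j i, E j i -> (j < N)%nat /\ (i < N)%nat.
Hypothesis HE_sc : forall i j, (i < N)%nat -> (j < N)%nat -> reach E i j.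
Hypothesis HE_loop : forall i, (i < N)%nat -> E i i.
Hypothesis Hsel_rng : forall i t, (i < N)%nat -> (sel i t < B)%nat.
Hypothesis Hsel_cyc : forall i, (i < N)%nat -> exists T, (0 < T)%nat /\
      forall t l, (l < B)%nat -> exists s, (s < T)%nat /\ sel i (t + s)%nat = l.
Hypothesis Hkappa : kappa > 0.
Hypothesis Ha_pos : forall l t i j, (l < B)%nat -> (i < N)%nat -> (j < N)%nat ->
      inEl E sel l t i j -> a l t i j > kappa.
Hypothesis Ha_zero : forall l t i j, (l < B)%nat -> (i < N)%nat -> (j < N)%nat ->
      ~ inEl E sel l t i j -> a l t i j = 0.
Hypothesis Ha_col : forall l t j, (l < B)%nat -> (j < N)%nat -> fsum N (fun i => a l t i j) = 1.
Hypothesis Htau : forall i, (i < N)%nat -> tau i > 0.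
Hypothesis Hft_C1 : forall i l, (i < N)%nat -> (l < B)%nat -> forall w, inK B K w ->
      forall z, K l z -> has_gradd_on d (K l) (fun u => ft i l u w) (gft i l z w) z /\
                         contd_on d (K l) (fun u => gft i l u w) z.
Hypothesis Hft_sc : forall i l, (i < N)%nat -> (l < B)%nat -> forall w, inK B K w ->
      strongly_convex_on d (K l) (tau i) (fun u => ft i l u w).
Hypothesis Hft_cons : forall i l, (i < N)%nat -> (l < B)%nat -> forall w, inK B K w ->
      forall k, (k < d)%nat -> gft i l (w l) w k = gf i w l k.
Hypothesis Hg_pos : forall t, 0 < gamma t <= 1.
Hypothesis Hg_dec : forall t, gamma (S t) <= gamma t.
Hypothesis Hg_sq : exists s, infinite_sum (fun t => (gamma t)^2) s.
Hypothesis Hx0 : forall i, (i < N)%nat -> inK B K (x O i).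
Hypothesis Hy0 : forall i l k, (i < N)%nat -> (l < B)%nat -> (k < d)%nat ->
      y O i l k = gf i (x O i) l k.
Hypothesis Hphi0 : forall i l, (i < N)%nat -> (l < B)%nat -> phi O i l = 1.
Hypothesis Hxt_K : forall t i, (i < N)%nat -> K (sel i t) (xt t i).
Hypothesis Hxt_min : forall t i, (i < N)%nat -> forall z, K (sel i t) z ->
      fhat N d ft gf i (sel i t) (xt t i) (x t i) (y t i (sel i t)) + r (sel i t) (xt t i)
      <= fhat N d ft gf i (sel i t) z (x t i) (y t i (sel i t)) + r (sel i t) z.
Hypothesis Hphi : forall t i l, (i < N)%nat -> (l < B)%nat ->
      phi (S t) i l = fsum N (fun j => a l t i j * phi t j l).
Hypothesis Hx : forall t i l k, (i < N)%nat -> (l < B)%nat -> (k < d)%nat ->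
      x (S t) i l k = fsum N (fun j => a l t i j * phi t j l / phi (S t) i l *
                        (x t j l k + gamma t * dx sel xt x t j l k)).
Hypothesis Hy : forall t i l k, (i < N)%nat -> (l < B)%nat -> (k < d)%nat ->
      y (S t) i l k = fsum N (fun j => a l t i j / phi (S t) i l *
                        (phi t j l * y t j l k + gf j (x (S t) j) l k - gf j (x t j) l k)).

Lemma a_ge0 l t i j : (l < B)%nat -> (i < N)%nat -> (j < N)%nat -> 0 <= a l t i j.
Proof.
  intros. destruct (classic (inEl E sel l t i j)) as [He|He].
  - pose proof (Ha_pos l t i j H H0 H1 He); lra.
  - rewrite Ha_zero; auto; lra.
Qed.

Lemma a_diag l t i : (l < B)%nat -> (i < N)%nat -> kappa <= a l t i i.
Proof. intros. left. apply Ha_pos; auto. split; auto. Qed.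

Lemma a_edge l t i j : (l < B)%nat -> E j i -> sel j t = l -> kappa <= a l t i j.
Proof. intros Hl He Hs. destruct (HE_nodes j i He). left. apply Ha_pos; auto. split; auto. Qed.

Lemma mprod_window_uniform : exists W, (1 <= W)%nat /\ forall l, (l < B)%nat ->
  forall s i j, (i < N)%nat -> (j < N)%nat -> kappa ^ W <= mprod N (a l) s W i j.
Proof.
  destruct (exists_uniform_nat (fun j T => forall t l, (l < B)%nat ->
      exists s, (s < T)%nat /\ sel j (t + s)%nat = l) N) as [T HT].
  { intros j w w' H Hw t l Hl. destruct (H t l Hl) as [s [Hs Hsl]]. exists s; split; auto; lia. }
  { intros j Hj. destruct (Hsel_cyc j Hj) as [T [_ HT]]. now exists T. }
  assert (exists w, forall l, (l < B)%nat -> forall n s i j, (w <= n)%nat -> (i < N)%nat ->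
     (j < N)%nat -> kappa ^ n <= mprod N (a l) s n i j) as [w Hw].
  { apply exists_uniform_nat.
    - intros l w w' H Hle n s i j Hn Hi Hj. apply H; auto; lia.
    - intros l Hl.
      destruct (mprod_ge_pow_eventually N (a l) (fun t i j Hi Hj => a_ge0 l t i j Hl Hi Hj) kappa
        ltac:(lra) (fun t i Hi => a_diag l t i Hl Hi) E (fun j t => sel j t = l) HE_nodes
        (fun t i j He Hs => a_edge l t i j Hl He Hs) T (fun j t Hj => HT j Hj t l Hl) HE_sc)
        as [W [_ HW]].
      now exists W. }
  exists (S w). split; [lia|]. intros. apply Hw; auto; lia.
Qed.

Lemma K_ext l z z' : (l < B)%nat -> K l z -> (forall k, (k < d)%nat -> z k = z' k) -> K l z'.
Proof.
  intros Hl Hz He. apply (HKcl l Hl (fun _ => z) z'); auto.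
  intros eps Heps. exists O. intros. unfold Rdist.
  rewrite normd_eq0, Rminus_0_r, Rabs_R0; [lra|]. intros k Hk. unfold subd. rewrite He; auto; ring.
Qed.

Lemma phi_pos t i l : (i < N)%nat -> (l < B)%nat -> 0 < phi t i l.
Proof.
  revert i. induction t as [|t IH]; intros i Hi Hl; [rewrite Hphi0; auto; lra|].
  rewrite Hphi by auto. apply Rlt_le_trans with (a l t i i * phi t i l).
  - apply Rmult_lt_0_compat; auto. pose proof (a_diag l t i Hl Hi); lra.
  - apply (fsum_term_le N (fun j => a l t i j * phi t j l)); auto.
    intros j Hj. apply Rmult_le_pos; [apply a_ge0; auto|left; apply IH; auto].
Qed.

(* Each block of [x (S t) i] is a convex combination of points of [K l]. *)
Lemma x_in_K t i : (i < N)%nat -> inK B K (x t i).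
Proof.
  revert i. induction t as [|t IH]; intros i Hi; [now apply Hx0|]. intros l Hl.
  apply (convexd_fsum d (K l) (fun z z' Hz He => K_ext l z z' Hl Hz He) (HKcv l Hl) N
     (fun j k => x t j l k + gamma t * dx sel xt x t j l k)
     (fun j => a l t i j * phi t j l / phi (S t) i l)).
  - intros j Hj. unfold dx. destruct (Nat.eqb_spec l (sel j t)) as [->|Hne].
    + apply (K_ext (sel j t) (combd (gamma t) (xt t j) (x t j (sel j t)))); auto.
      * apply HKcv; auto; [now apply IH|pose proof (Hg_pos t); lra].
      * intros k Hk. unfold combd. ring.
    + apply (K_ext l (x t j l)); auto; [now apply IH|intros; ring].
  - intros j Hj. pose proof (phi_pos (S t) i l Hi Hl). pose proof (phi_pos t j l Hj Hl).
    pose proof (a_ge0 l t i j Hl Hi Hj). apply Rmult_le_pos; [nra|left; now apply Rinv_0_lt_compat].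
  - unfold Rdiv. rewrite fsum_scal_r, <- Hphi by auto. field. pose proof (phi_pos (S t) i l Hi Hl). lra.
  - intros k Hk. now rewrite Hx.
Qed.

Hypothesis HB : (1 <= B)%nat.
Hypothesis Hd : (1 <= d)%nat.
Variable W : nat.
Hypothesis W_pos : (1 <= W)%nat.
Hypothesis W_window : forall l, (l < B)%nat -> forall s i j, (i < N)%nat -> (j < N)%nat ->
  kappa ^ W <= mprod N (a l) s W i j.
Variables Mg L Mr tm : R.
Hypothesis gf_bd : forall j z, (j < N)%nat -> inK B K z -> normx B d (gf j z) <= Mg.
Hypothesis L_ge0 : 0 <= L.
Hypothesis gf_Lip : forall j z w, (j < N)%nat -> inK B K z -> inK B K w ->
  normx B d (subx (gf j z) (gf j w)) <= L * normx B d (subx z w).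
Hypothesis r_subgrad_bd : forall l z g, (l < B)%nat -> K l z -> is_subgrad d (r l) g z -> normd d g <= Mr.
Hypothesis tm_pos : 0 < tm.
Hypothesis tm_le_tau : forall i, (i < N)%nat -> tm <= tau i.

Local Notation kern := (gkernel (mix_rate N kappa W) W).

Definition kern_mass := INR W / (1 - mix_rate N kappa W).

Lemma rate_bounds : 0 <= mix_rate N kappa W < 1.
Proof.
  apply (mix_rate_bounds N HN (a 0) (fun t j Hj => Ha_col 0 t j ltac:(lia) Hj) kappa ltac:(lra)
    W W_pos (W_window 0 ltac:(lia))).
Qed.

Lemma kern_ge0 n : 0 <= kern n.
Proof. apply gkernel_ge0, rate_bounds. Qed.

Lemma kern_sums n : fsum n kern <= kern_mass.
Proof. apply fsum_gkernel_le; auto; apply rate_bounds. Qed.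

Lemma kern_mass_ge0 : 0 <= kern_mass.
Proof. pose proof (kern_sums O). simpl in H. lra. Qed.

Lemma window_pos : 0 < kappa ^ W.
Proof. apply pow_lt; lra. Qed.

Lemma block_pushsum_dev l (u e : nat -> nat -> R) : (l < B)%nat ->
  (forall t i, (i < N)%nat -> u (S t) i = fsum N (fun j => a l t i j * (u t j + e t j))) ->
  forall t i, (i < N)%nat ->
  Rabs (u t i / phi t i l - fsum N (fun j => u t j) / INR N) <=
  (kern t * fsum N (fun j => Rabs (u O j))
   + conv kern (fun s => fsum N (fun j => Rabs (e s j))) t) / kappa ^ W.
Proof.
  intros Hl Hu. apply (pushsum_ratio_dev N HN (a l) (fun t i j Hi Hj => a_ge0 l t i j Hl Hi Hj)
    (fun t j Hj => Ha_col l t j Hl Hj) kappa ltac:(lra) (fun t i Hi => a_diag l t i Hl Hi) W W_pos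
    (W_window l Hl) (fun t i => phi t i l) (fun i Hi => Hphi0 i l Hi Hl) (fun t i Hi => Hphi t i l Hi Hl)
    u e Hu).
Qed.

Lemma phi_le_N_block t i l : (i < N)%nat -> (l < B)%nat -> phi t i l <= INR N.
Proof.
  intros Hi Hl. apply (phi_le_N N (a l) (fun t i j Hi Hj => a_ge0 l t i j Hl Hi Hj)
    (fun t j Hj => Ha_col l t j Hl Hj) (fun t i => phi t i l) (fun i Hi => Hphi0 i l Hi Hl)
    (fun t i Hi => Hphi t i l Hi Hl) t i Hi).
Qed.

Definition phi_y l k t i := phi t i l * y t i l k.
Definition dgrad l k t j := gf j (x (S t) j) l k - gf j (x t j) l k.

Lemma phi_y_step l k : (l < B)%nat -> (k < d)%nat -> forall t i, (i < N)%nat ->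
  phi_y l k (S t) i = fsum N (fun j => a l t i j * (phi_y l k t j + dgrad l k t j)).
Proof.
  intros Hl Hk t i Hi. unfold phi_y, dgrad. rewrite Hy, <- fsum_scal_l by auto. apply fsum_ext.
  intros j Hj. pose proof (phi_pos (S t) i l Hi Hl). field. lra.
Qed.

Lemma phi_y_sum l k : (l < B)%nat -> (k < d)%nat -> forall t,
  fsum N (fun j => phi_y l k t j) = fsum N (fun j => gf j (x t j) l k).
Proof.
  intros Hl Hk t. induction t as [|t IH].
  - apply fsum_ext. intros j Hj. unfold phi_y. rewrite Hphi0, Hy0 by auto. ring.
  - rewrite (u_sum_step N (a l) (fun t j Hj => Ha_col l t j Hl Hj) (phi_y l k) (dgrad l k)
      (phi_y_step l k Hl Hk) t), IH.
    unfold dgrad. rewrite fsum_sub. ring.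
Qed.

Lemma gf_coord_le j z l k : (j < N)%nat -> inK B K z -> (l < B)%nat -> (k < d)%nat ->
  Rabs (gf j z l k) <= Mg.
Proof. intros. eapply Rle_trans; [apply (normx_coord B d); auto|now apply gf_bd]. Qed.

Lemma Mg_ge0 : 0 <= Mg.
Proof.
  pose proof (gf_bd 0 (x O 0) ltac:(lia) (x_in_K O 0 ltac:(lia))).
  pose proof (normx_ge0 B d (gf 0%nat (x O 0%nat))). lra.
Qed.

Lemma Rabs_avg_le n (v : nat -> R) M : (0 < n)%nat -> (forall j, (j < n)%nat -> Rabs (v j) <= M) ->
  Rabs (fsum n v / INR n) <= M.
Proof.
  intros Hn Hv. assert (0 < INR n) by (apply lt_0_INR; lia).
  unfold Rdiv. rewrite Rabs_mult, (Rabs_right (/ INR n)) by (apply Rle_ge; left; now apply Rinv_0_lt_compat).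
  apply Rmult_le_reg_r with (INR n); auto. rewrite Rmult_assoc, Rinv_l, Rmult_1_r by lra.
  eapply Rle_trans; [apply fsum_abs|]. rewrite Rmult_comm, <- fsum_const. now apply fsum_le.
Qed.

Definition y_bound := Mg + (INR N * Mg + kern_mass * (2 * INR N * Mg)) / kappa ^ W.

Lemma y_coord_le t i l k : (i < N)%nat -> (l < B)%nat -> (k < d)%nat -> Rabs (y t i l k) <= y_bound.
Proof.
  intros Hi Hl Hk.
  pose proof (block_pushsum_dev l (phi_y l k) (dgrad l k) Hl (phi_y_step l k Hl Hk) t i Hi) as H.
  rewrite phi_y_sum in H by auto.
  replace (phi_y l k t i / phi t i l) with (y t i l k) in H
    by (unfold phi_y; pose proof (phi_pos t i l Hi Hl); field; lra).
  pose proof window_pos. pose proof Mg_ge0. pose proof kern_mass_ge0.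
  assert (Hinit : kern t * fsum N (fun j => Rabs (phi_y l k O j)) <= INR N * Mg).
  { assert (fsum N (fun j => Rabs (phi_y l k O j)) <= INR N * Mg).
    { rewrite <- fsum_const. apply fsum_le. intros j Hj. unfold phi_y.
      rewrite Hphi0, Hy0, Rmult_1_l by auto. apply gf_coord_le; auto. }
    pose proof (gkernel_le1 _ (proj1 rate_bounds) (proj2 rate_bounds) W t). pose proof (kern_ge0 t).
    assert (0 <= fsum N (fun j => Rabs (phi_y l k O j))) by (apply fsum_ge0; intros; apply Rabs_pos).
    nra. }
  assert (Hincr : conv kern (fun s => fsum N (fun j => Rabs (dgrad l k s j))) t
                  <= kern_mass * (2 * INR N * Mg)).
  { eapply Rle_trans; [|apply (conv_const_le kern kern_mass kern_ge0 kern_sums); pose proof (pos_INR N); nra].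
    apply fsum_le. intros s Hs. apply Rmult_le_compat_l; [apply kern_ge0|].
    replace (2 * INR N * Mg) with (INR N * (2 * Mg)) by ring. rewrite <- fsum_const. apply fsum_le.
    intros j Hj. unfold dgrad. eapply Rle_trans; [apply Rabs_triang|]. rewrite Rabs_Ropp.
    pose proof (gf_coord_le j (x (S s) j) l k Hj (x_in_K _ _ Hj) Hl Hk).
    pose proof (gf_coord_le j (x s j) l k Hj (x_in_K _ _ Hj) Hl Hk). lra. }
  assert (Havg : Rabs (fsum N (fun j => gf j (x t j) l k) / INR N) <= Mg)
    by (apply Rabs_avg_le; [lia|intros; apply gf_coord_le; auto; now apply x_in_K]).
  assert (Rabs (y t i l k - fsum N (fun j => gf j (x t j) l k) / INR N)
          <= (INR N * Mg + kern_mass * (2 * INR N * Mg)) / kappa ^ W).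
  { eapply Rle_trans; [apply H|]. unfold Rdiv. apply Rmult_le_compat_r; [left; now apply Rinv_0_lt_compat|lra]. }
  pose proof (Rabs_triang (y t i l k - fsum N (fun j => gf j (x t j) l k) / INR N)
                          (fsum N (fun j => gf j (x t j) l k) / INR N)) as Htr.
  replace (y t i l k - fsum N (fun j => gf j (x t j) l k) / INR N + fsum N (fun j => gf j (x t j) l k) / INR N)
    with (y t i l k) in Htr by ring.
  unfold y_bound. lra.
Qed.

Definition step_bound := (INR N * (INR d * y_bound) + Mr) / tm.

Lemma block_step_le t i : (i < N)%nat -> normd d (subd (x t i (sel i t)) (xt t i)) <= step_bound.
Proof.
  intros Hi. set (l := sel i t). assert (Hl : (l < B)%nat) by now apply Hsel_rng.
  pose proof (x_in_K t i Hi) as HxK.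
  pose proof (minimizer_dist_le d (K l) (fun u => ft i l u (x t i)) (fun z => gft i l z (x t i)) (r l)
    (tau i) Mr (Htau i Hi) (HKcv l Hl) (fun z z' Hz He => K_ext l z z' Hl Hz He)
    (fun z Hz => proj1 (Hft_C1 i l Hi Hl (x t i) HxK z Hz))
    (Hft_sc i l Hi Hl (x t i) HxK) (Hr_cvx l Hl) (fun z g Hz Hg => r_subgrad_bd l z g Hl Hz Hg)
    (fun k => INR N * y t i l k - gf i (x t i) l k) (x t i l) (xt t i) (HxK l Hl) (Hxt_K t i Hi)) as H.
  cbv beta in H.
  rewrite (normd_ext d (fun k => gft i l (x t i l) (x t i) k + (INR N * y t i l k - gf i (x t i) l k))
    (fun k => INR N * y t i l k)), normd_scal in H
    by (try apply pos_INR; intros k Hk; rewrite Hft_cons; auto; ring).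
  assert (normd d (y t i l) <= INR d * y_bound).
  { eapply Rle_trans; [apply normd_le_sum_abs|]. rewrite <- fsum_const. apply fsum_le.
    intros; now apply y_coord_le. }
  assert (tau i * normd d (subd (x t i l) (xt t i)) <= INR N * (INR d * y_bound) + Mr).
  { assert (INR N * normd d (y t i l) <= INR N * (INR d * y_bound))
      by (apply Rmult_le_compat_l; auto; apply pos_INR).
    enough (tau i * normd d (subd (x t i l) (xt t i))
            <= INR N * normd d (y t i l) + Mr) by lra.
    apply H. intros z Hz. pose proof (Hxt_min t i Hi z Hz) as Hm. unfold fhat in Hm. fold l in Hm. lra. }
  unfold step_bound. apply Rmult_le_reg_l with tm; auto.
  replace (tm * ((INR N * (INR d * y_bound) + Mr) / tm)) with (INR N * (INR d * y_bound) + Mr) by (field; lra).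
  pose proof (tm_le_tau i Hi). pose proof (normd_ge0 d (subd (x t i l) (xt t i))). nra.
Qed.

Lemma dx_le t i l k : (i < N)%nat -> (k < d)%nat -> Rabs (dx sel xt x t i l k) <= step_bound.
Proof.
  intros Hi Hk. pose proof (block_step_le t i Hi). unfold dx. destruct (Nat.eqb_spec l (sel i t)) as [->|Hne].
  - eapply Rle_trans; [|eassumption]. rewrite Rabs_minus_sym. exact (normd_coord d (subd (x t i (sel i t)) (xt t i)) k Hk).
  - rewrite Rabs_R0. pose proof (normd_ge0 d (subd (x t i (sel i t)) (xt t i))). lra.
Qed.

Lemma step_bound_ge0 : 0 <= step_bound.
Proof. eapply Rle_trans; [apply Rabs_pos|apply (dx_le O 0 0 0); lia]. Qed.

Definition phi_x l k t i := phi t i l * x t i l k.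
Definition x_push l k t j := gamma t * phi t j l * dx sel xt x t j l k.

Lemma phi_x_step l k : (l < B)%nat -> (k < d)%nat -> forall t i, (i < N)%nat ->
  phi_x l k (S t) i = fsum N (fun j => a l t i j * (phi_x l k t j + x_push l k t j)).
Proof.
  intros Hl Hk t i Hi. unfold phi_x, x_push. rewrite Hx, <- fsum_scal_l by auto. apply fsum_ext.
  intros j Hj. pose proof (phi_pos (S t) i l Hi Hl). field. lra.
Qed.

Lemma x_push_le l k t j : (l < B)%nat -> (k < d)%nat -> (j < N)%nat ->
  Rabs (x_push l k t j) <= gamma t * (INR N * step_bound).
Proof.
  intros. unfold x_push. pose proof (Hg_pos t). pose proof (phi_pos t j l H1 H).
  rewrite !Rabs_mult, (Rabs_right (gamma t)), (Rabs_right (phi t j l)), Rmult_assoc by lra.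
  apply Rmult_le_compat_l; [lra|]. apply Rmult_le_compat; [lra|apply Rabs_pos| |].
  - now apply phi_le_N_block.
  - now apply dx_le.
Qed.

Definition init_mass (F : nat -> nat -> nat -> R) := fsum B (fun l => fsum d (fun k => fsum N (fun j => Rabs (F l k j)))).
Definition x0_mass := init_mass (fun l k j => x O j l k).
Definition g0_mass := init_mass (fun l k j => gf j (x O j) l k).

Lemma init_mass_ge0 F : 0 <= init_mass F.
Proof. apply fsum_ge0; intros; apply fsum_ge0; intros; apply fsum_ge0; intros; apply Rabs_pos. Qed.

Lemma init_mass_term F l k : (l < B)%nat -> (k < d)%nat -> fsum N (fun j => Rabs (F l k j)) <= init_mass F.
Proof.
  intros. eapply Rle_trans; [|apply (fsum_term_le B (fun l => fsum d (fun k => fsum N (fun j => Rabs (F l k j)))) l)]; auto.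
  - apply (fsum_term_le d (fun k => fsum N (fun j => Rabs (F l k j))) k); auto.
    intros; apply fsum_ge0; intros; apply Rabs_pos.
  - intros; apply fsum_ge0; intros; apply fsum_ge0; intros; apply Rabs_pos.
Qed.

Definition cons_bound t := (kern t * x0_mass + INR N * INR N * step_bound * conv kern gamma t) / kappa ^ W.

Lemma x_cons_dev l k t i : (l < B)%nat -> (k < d)%nat -> (i < N)%nat ->
  Rabs (x t i l k - fsum N (fun j => phi_x l k t j) / INR N) <= cons_bound t.
Proof.
  intros Hl Hk Hi. pose proof (block_pushsum_dev l (phi_x l k) (x_push l k) Hl (phi_x_step l k Hl Hk) t i Hi) as H.
  replace (phi_x l k t i / phi t i l) with (x t i l k) in H
    by (unfold phi_x; pose proof (phi_pos t i l Hi Hl); field; lra).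
  eapply Rle_trans; [apply H|]. unfold cons_bound, Rdiv.
  apply Rmult_le_compat_r; [left; apply Rinv_0_lt_compat, window_pos|].
  apply Rplus_le_compat; [apply Rmult_le_compat_l; [apply kern_ge0|]|].
  - rewrite (fsum_ext N _ (fun j => Rabs (x O j l k))) by (intros j Hj; unfold phi_x; rewrite Hphi0 by auto; f_equal; ring).
    apply (init_mass_term (fun l k j => x O j l k)); auto.
  - unfold conv. rewrite <- fsum_scal_l. apply fsum_le. intros s Hs.
    replace (INR N * INR N * step_bound * (kern (t - s)%nat * gamma s))
      with (kern (t - s)%nat * (INR N * (gamma s * (INR N * step_bound)))) by ring.
    apply Rmult_le_compat_l; [apply kern_ge0|]. rewrite <- fsum_const. apply fsum_le.
    intros; now apply x_push_le.
Qed.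

Definition incr_bound t := cons_bound (S t) + cons_bound t + gamma t * (INR N * step_bound).

(* both iterates are close to the same running average, which moves by at most [gamma t N step_bound] *)
Lemma x_incr_le l k t i : (l < B)%nat -> (k < d)%nat -> (i < N)%nat ->
  Rabs (x (S t) i l k - x t i l k) <= incr_bound t.
Proof.
  intros Hl Hk Hi. pose proof (x_cons_dev l k (S t) i Hl Hk Hi). pose proof (x_cons_dev l k t i Hl Hk Hi).
  rewrite (u_sum_step N (a l) (fun t j Hj => Ha_col l t j Hl Hj) _ _ (phi_x_step l k Hl Hk)) in H.
  assert (Rabs (fsum N (fun j => x_push l k t j) / INR N) <= gamma t * (INR N * step_bound))
    by (apply Rabs_avg_le; [lia|intros; now apply x_push_le]).
  set (U := fsum N (fun j => phi_x l k t j)) in *. set (V := fsum N (fun j => x_push l k t j)) in *.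
  assert (HNp : 0 < INR N) by (apply lt_0_INR; lia).
  replace (x (S t) i l k - x t i l k)
    with ((x (S t) i l k - (U + V) / INR N) - (x t i l k - U / INR N) + V / INR N) by (field; lra).
  unfold incr_bound. eapply Rle_trans; [apply Rabs_triang|].
  eapply Rle_trans; [apply Rplus_le_compat_r, Rabs_triang|]. rewrite Rabs_Ropp. lra.
Qed.

Lemma incr_bound_ge0 t : 0 <= incr_bound t.
Proof.
  eapply Rle_trans; [apply Rabs_pos|apply (x_incr_le 0 0 t 0); lia].
Qed.

Lemma dgrad_le l k t j : (l < B)%nat -> (k < d)%nat -> (j < N)%nat ->
  Rabs (dgrad l k t j) <= L * (INR B * (INR d * incr_bound t)).
Proof.
  intros. unfold dgrad.
  eapply Rle_trans; [apply (normx_coord B d (subx (gf j (x (S t) j)) (gf j (x t j))) l k); auto|].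
  eapply Rle_trans; [apply gf_Lip; auto; now apply x_in_K|]. apply Rmult_le_compat_l; auto.
  apply normx_le_const. intros; unfold subx; now apply x_incr_le.
Qed.

Definition track_bound t :=
  (kern t * g0_mass + INR N * L * INR B * INR d * conv kern incr_bound t) / kappa ^ W.

Lemma y_track_dev l k t i : (l < B)%nat -> (k < d)%nat -> (i < N)%nat ->
  Rabs (y t i l k - / INR N * fsum N (fun j => gf j (x t j) l k)) <= track_bound t.
Proof.
  intros Hl Hk Hi. pose proof (block_pushsum_dev l (phi_y l k) (dgrad l k) Hl (phi_y_step l k Hl Hk) t i Hi) as H.
  rewrite phi_y_sum in H by auto.
  replace (phi_y l k t i / phi t i l) with (y t i l k) in H
    by (unfold phi_y; pose proof (phi_pos t i l Hi Hl); field; lra).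
  rewrite Rmult_comm. fold (Rdiv (fsum N (fun j => gf j (x t j) l k)) (INR N)).
  eapply Rle_trans; [apply H|]. unfold track_bound, Rdiv.
  apply Rmult_le_compat_r; [left; apply Rinv_0_lt_compat, window_pos|].
  apply Rplus_le_compat; [apply Rmult_le_compat_l; [apply kern_ge0|]|].
  - rewrite (fsum_ext N _ (fun j => Rabs (gf j (x O j) l k)))
      by (intros j Hj; unfold phi_y; rewrite Hphi0, Hy0 by auto; f_equal; ring).
    apply (init_mass_term (fun l k j => gf j (x O j) l k)); auto.
  - unfold conv. rewrite <- fsum_scal_l. apply fsum_le. intros s Hs.
    replace (INR N * L * INR B * INR d * (kern (t - s)%nat * incr_bound s))
      with (kern (t - s)%nat * (INR N * (L * (INR B * (INR d * incr_bound s))))) by ring.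
    apply Rmult_le_compat_l; [apply kern_ge0|]. rewrite <- fsum_const. apply fsum_le.
    intros; now apply dgrad_le.
Qed.

Lemma track_bound_ge0 t : 0 <= track_bound t.
Proof.
  pose proof window_pos. pose proof (kern_ge0 t). pose proof (init_mass_ge0 (fun l k j => gf j (x O j) l k)).
  pose proof (conv_ge0 kern kern_ge0 incr_bound t incr_bound_ge0).
  assert (0 <= INR N * L * INR B * INR d)
    by (pose proof (pos_INR N); pose proof (pos_INR B); pose proof (pos_INR d);
        repeat apply Rmult_le_pos; auto).
  apply Rmult_le_pos; [|left; now apply Rinv_0_lt_compat]. fold g0_mass in *. nra.
Qed.

Lemma track_err_le t i : (i < N)%nat -> track_err N B d gf x y t i <= INR B * (INR d * track_bound t).
Proof. intros Hi. apply normx_le_const. intros; now apply y_track_dev. Qed.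

Lemma gamma_ge0 t : 0 <= gamma t.
Proof. pose proof (Hg_pos t); lra. Qed.

Lemma bps_gamma_sqr : bounded_partial_sums (fun t => gamma t ^ 2).
Proof. destruct Hg_sq as [s Hs]. apply (infinite_sum_bps _ s); auto. intros; apply pow2_ge_0. Qed.

Lemma gamma_cv0 : Un_cv gamma 0.
Proof. apply cv0_of_decreasing_sqr_summable; [apply Hg_pos|apply Hg_dec|apply bps_gamma_sqr]. Qed.

Lemma kern_conv_cv0 c : (forall n, 0 <= c n) -> Un_cv c 0 -> Un_cv (conv kern c) 0.
Proof.
  apply (conv_cv0 kern kern_mass kern_ge0 kern_sums).
  apply gkernel_cv0; auto; apply rate_bounds.
Qed.

Lemma bound_shape_cv0 c0 c1 c : (forall n, 0 <= c n) -> Un_cv c 0 ->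
  Un_cv (fun t => (kern t * c0 + c1 * conv kern c t) / kappa ^ W) 0.
Proof.
  intros Hc Hcv. apply (cv0_ext _ (fun t => / kappa ^ W * (c0 * kern t + c1 * conv kern c t)));
    [intros; unfold Rdiv; ring|].
  apply cv0_scal, cv0_add, cv0_scal; [apply cv0_scal, gkernel_cv0; auto; apply rate_bounds|].
  now apply kern_conv_cv0.
Qed.

Lemma cons_bound_cv0 : Un_cv cons_bound 0.
Proof. apply bound_shape_cv0; [apply gamma_ge0|apply gamma_cv0]. Qed.

Lemma incr_bound_cv0 : Un_cv incr_bound 0.
Proof.
  apply cv0_add; [apply cv0_add; [apply cv0_shift|]; apply cons_bound_cv0|].
  apply (cv0_ext _ (fun t => (INR N * step_bound) * gamma t)); [intros; ring|].
  apply cv0_scal, gamma_cv0.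
Qed.

Lemma track_bound_cv0 : Un_cv track_bound 0.
Proof. apply bound_shape_cv0; [apply incr_bound_ge0|apply incr_bound_cv0]. Qed.

Lemma bound_shape_bps c0 c1 c : 0 <= c0 -> 0 <= c1 -> (forall n, 0 <= c n) ->
  bounded_partial_sums c ->
  bounded_partial_sums (fun t => (kern t * c0 + c1 * conv kern c t) / kappa ^ W).
Proof.
  intros Hc0 Hc1 Hc Hb. pose proof window_pos.
  apply (bps_le _ (fun t => / kappa ^ W * (c0 * kern t + c1 * conv kern c t))).
  - intros t. pose proof (kern_ge0 t). pose proof (conv_ge0 kern kern_ge0 c t Hc).
    split; [|right; unfold Rdiv; ring].
    apply Rmult_le_pos; [|left; now apply Rinv_0_lt_compat]. nra.
  - apply bps_scal; [left; now apply Rinv_0_lt_compat|].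
    apply bps_add; apply bps_scal; auto.
    + exists kern_mass. apply kern_sums.
    + now apply (bps_conv kern kern_mass kern_ge0 kern_sums).
Qed.

(* [gamma] decreases, so weighting by [gamma t] moves inside the convolution *)
Lemma gamma_bound_shape_le c0 c1 c n t : 0 <= c0 -> 0 <= c1 -> (forall n, 0 <= c n) -> (n <= S t)%nat ->
  gamma t * ((kern n * c0 + c1 * conv kern c n) / kappa ^ W)
  <= (kern n * c0 + c1 * conv kern (fun s => gamma s * c s) n) / kappa ^ W.
Proof.
  intros Hc0 Hc1 Hc Hn. pose proof window_pos. pose proof (Hg_pos t). pose proof (kern_ge0 n).
  pose proof (conv_scal_decreasing_le kern c gamma n t kern_ge0 Hc gamma_ge0 Hg_dec Hn).
  pose proof (conv_ge0 kern kern_ge0 c n Hc).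
  assert (c1 * (gamma t * conv kern c n) <= c1 * conv kern (fun s => gamma s * c s) n)
    by now apply Rmult_le_compat_l.
  assert (0 <= kern n * c0) by now apply Rmult_le_pos.
  unfold Rdiv. rewrite <- Rmult_assoc.
  apply Rmult_le_compat_r; [left; now apply Rinv_0_lt_compat|]. nra.
Qed.

Lemma bps_gamma_incr : bounded_partial_sums (fun t => gamma t * incr_bound t).
Proof.
  set (c1 := INR N * INR N * step_bound).
  assert (Hc1 : 0 <= c1)
    by (unfold c1; pose proof (pos_INR N); pose proof step_bound_ge0; apply Rmult_le_pos; auto; nra).
  set (shape := fun n => (kern n * x0_mass + c1 * conv kern (fun s => gamma s * gamma s) n) / kappa ^ W).
  assert (Hshape : bounded_partial_sums shape).
  { apply bound_shape_bps; auto; [apply init_mass_ge0|intros; pose proof (gamma_ge0 n); nra|].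
    eapply bps_le; [|exact bps_gamma_sqr]. intros n; pose proof (gamma_ge0 n); split; [nra|right; ring]. }
  assert (Hshape_ge0 : forall n, 0 <= shape n).
  { intros n. unfold shape. pose proof window_pos. pose proof (kern_ge0 n). pose proof (init_mass_ge0 (fun l k j => x O j l k)).
    pose proof (conv_ge0 kern kern_ge0 (fun s => gamma s * gamma s) n (fun s => ltac:(pose proof (gamma_ge0 s); nra))).
    apply Rmult_le_pos; [|left; now apply Rinv_0_lt_compat]. fold x0_mass in *. nra. }
  apply (bps_le _ (fun t => shape (S t) + shape t + (INR N * step_bound) * gamma t ^ 2)).
  - intros t. pose proof (gamma_ge0 t). pose proof (incr_bound_ge0 t). split; [nra|].
    unfold incr_bound. rewrite !Rmult_plus_distr_l.
    pose proof (gamma_bound_shape_le x0_mass c1 gamma (S t) t (init_mass_ge0 _) Hc1 gamma_ge0 (le_n _)).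
    pose proof (gamma_bound_shape_le x0_mass c1 gamma t t (init_mass_ge0 _) Hc1 gamma_ge0 ltac:(lia)).
    unfold cons_bound, shape. fold c1. nra.
  - apply bps_add; [apply bps_add; [now apply bps_shift|auto]|].
    apply bps_scal; [pose proof (pos_INR N); pose proof step_bound_ge0; nra|apply bps_gamma_sqr].
Qed.

Lemma bps_gamma_track : bounded_partial_sums (fun t => gamma t * (INR B * (INR d * track_bound t))).
Proof.
  set (c2 := INR N * L * INR B * INR d).
  assert (Hc2 : 0 <= c2) by (unfold c2; pose proof (pos_INR N); pose proof (pos_INR B);
                              pose proof (pos_INR d); repeat apply Rmult_le_pos; auto).
  assert (HBd : 0 <= INR B * INR d) by (apply Rmult_le_pos; apply pos_INR).
  apply (bps_le _ (fun t => (INR B * INR d) *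
    ((kern t * g0_mass + c2 * conv kern (fun s => gamma s * incr_bound s) t) / kappa ^ W))).
  - intros t. pose proof (gamma_ge0 t). pose proof (track_bound_ge0 t).
    split; [apply Rmult_le_pos; auto; rewrite <- Rmult_assoc; now apply Rmult_le_pos|].
    replace (gamma t * (INR B * (INR d * track_bound t))) with (INR B * INR d * (gamma t * track_bound t))
      by ring.
    apply Rmult_le_compat_l; auto. unfold track_bound. fold c2.
    apply gamma_bound_shape_le; auto; [apply init_mass_ge0|apply incr_bound_ge0].
  - apply bps_scal; auto. apply bound_shape_bps; auto; [apply init_mass_ge0| |apply bps_gamma_incr].
    intros n; pose proof (gamma_ge0 n); pose proof (incr_bound_ge0 n); nra.
Qed.

Lemma tracking_error_vanishes i : (i < N)%nat ->
  Un_cv (fun t => track_err N B d gf x y t i) 0 /\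
  exists s, infinite_sum (fun t => gamma t * track_err N B d gf x y t i) s.
Proof.
  intros Hi. assert (Hge0 : forall t, 0 <= track_err N B d gf x y t i) by (intros; apply normx_ge0).
  split.
  - apply (cv0_squeeze _ (fun t => (INR B * INR d) * track_bound t)).
    + intros t. split; auto. rewrite Rmult_assoc. now apply track_err_le.
    + apply cv0_scal, track_bound_cv0.
  - apply bps_infinite_sum; [intros; apply Rmult_le_pos; auto; apply gamma_ge0|].
    eapply bps_le; [|exact bps_gamma_track]. intros t. split; [apply Rmult_le_pos; auto; apply gamma_ge0|].
    apply Rmult_le_compat_l; [apply gamma_ge0|now apply track_err_le].
Qed.

End Algorithm.
Theorem mainTheorem6
  (N B d : nat)
  (K : nat -> vecd -> Prop)
  (f : nat -> vecx -> R) (gf : nat -> vecx -> vecx)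
  (r : nat -> vecd -> R)
  (E : nat -> nat -> Prop)
  (sel : nat -> nat -> nat)
  (kappa : R) (a : nat -> nat -> nat -> nat -> R)
  (ft : nat -> nat -> vecd -> vecx -> R) (gft : nat -> nat -> vecd -> vecx -> vecd)
  (tau : nat -> R)
  (gamma : nat -> R)
  (x y : nat -> nat -> vecx) (phi : nat -> nat -> nat -> R)
  (xt : nat -> nat -> vecd)
  (* dimensions *)
  (HN : (1 <= N)%nat) (HB : (1 <= B)%nat) (Hd : (1 <= d)%nat)
  (* constraint sets *)
  (HKne : forall l, (l < B)%nat -> exists z, K l z)
  (HKcl : forall l, (l < B)%nat -> closedd d (K l))
  (HKcv : forall l, (l < B)%nat -> convexd (K l))
  (* smooth parts: C^1 on an open set containing K, Lipschitz and bounded gradient on K *)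
  (Hf_C1 : forall i, (i < N)%nat -> exists O : vecx -> Prop, openx B d O /\
      (forall z, inK B K z -> O z) /\
      (forall z, O z -> has_gradx B d (f i) (gf i z) z /\ contx_at B d (gf i) z))
  (Hf_Lip : forall i, (i < N)%nat -> exists L, forall z w, inK B K z -> inK B K w ->
      normx B d (subx (gf i z) (gf i w)) <= L * normx B d (subx z w))
  (Hf_bd : forall i, (i < N)%nat -> exists M, forall z, inK B K z -> normx B d (gf i z) <= M)
  (* nonsmooth parts *)
  (Hr_cvx : forall l, (l < B)%nat -> strongly_convex_on d (fun _ => True) 0 (r l))
  (Hr_bd : forall l, (l < B)%nat -> exists M, forall z g, K l z -> is_subgrad d (r l) g z ->
      normd d g <= M)
  (* coercivity of U on K *)
  (HU : forall M, exists rho, forall z, inK B K z -> normx B d z >= rho ->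
      fsum N (fun i => f i z) + fsum B (fun l => r l (z l)) >= M)
  (* network: digraph on {0,..,N-1}, strongly connected, with all self-loops *)
  (HE_nodes : forall j i, E j i -> (j < N)%nat /\ (i < N)%nat)
  (HE_sc : forall i j, (i < N)%nat -> (j < N)%nat -> reach E i j)
  (HE_loop : forall i, (i < N)%nat -> E i i)
  (* block selection *)
  (Hsel_rng : forall i t, (i < N)%nat -> (sel i t < B)%nat)
  (Hsel_cyc : forall i, (i < N)%nat -> exists T, (0 < T)%nat /\
      forall t l, (l < B)%nat -> exists s, (s < T)%nat /\ sel i (t + s)%nat = l)
  (* weights *)
  (Hkappa : kappa > 0)
  (Ha_pos : forall l t i j, (l < B)%nat -> (i < N)%nat -> (j < N)%nat ->
      inEl E sel l t i j -> a l t i j > kappa)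
  (Ha_zero : forall l t i j, (l < B)%nat -> (i < N)%nat -> (j < N)%nat ->
      ~ inEl E sel l t i j -> a l t i j = 0)
  (Ha_col : forall l t j, (l < B)%nat -> (j < N)%nat ->
      fsum N (fun i => a l t i j) = 1)
  (* surrogates *)
  (Htau : forall i, (i < N)%nat -> tau i > 0)
  (Hft_C1 : forall i l, (i < N)%nat -> (l < B)%nat -> forall w, inK B K w ->
      forall z, K l z -> has_gradd_on d (K l) (fun u => ft i l u w) (gft i l z w) z /\
                         contd_on d (K l) (fun u => gft i l u w) z)
  (Hft_sc : forall i l, (i < N)%nat -> (l < B)%nat -> forall w, inK B K w ->
      strongly_convex_on d (K l) (tau i) (fun u => ft i l u w))
  (Hft_cons : forall i l, (i < N)%nat -> (l < B)%nat -> forall w, inK B K w ->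
      forall k, (k < d)%nat -> gft i l (w l) w k = gf i w l k)
  (Hft_Lip : forall i l, (i < N)%nat -> (l < B)%nat -> exists L, forall z w w',
      K l z -> inK B K w -> inK B K w' ->
      normd d (subd (gft i l z w) (gft i l z w')) <= L * normx B d (subx w w'))
  (* step sizes *)
  (Hg_pos : forall t, 0 < gamma t <= 1)
  (Hg_dec : forall t, gamma (S t) <= gamma t)
  (Hg_div : cv_infty (fun n => sum_f_R0 gamma n))
  (Hg_sq : exists s, infinite_sum (fun t => (gamma t)^2) s)
  (* algorithm: initialization *)
  (Hx0 : forall i, (i < N)%nat -> inK B K (x O i))
  (Hy0 : forall i l k, (i < N)%nat -> (l < B)%nat -> (k < d)%nat ->
      y O i l k = gf i (x O i) l k)
  (Hphi0 : forall i l, (i < N)%nat -> (l < B)%nat -> phi O i l = 1)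
  (* algorithm: local block minimization *)
  (Hxt_K : forall t i, (i < N)%nat -> K (sel i t) (xt t i))
  (Hxt_min : forall t i, (i < N)%nat -> forall z, K (sel i t) z ->
      fhat N d ft gf i (sel i t) (xt t i) (x t i) (y t i (sel i t)) + r (sel i t) (xt t i)
      <= fhat N d ft gf i (sel i t) z (x t i) (y t i (sel i t)) + r (sel i t) z)
  (* algorithm: consensus / tracking updates (a vanishes off E_l^t, so the sums
     over N_{i,l}^t are sums over all agents) *)
  (Hphi : forall t i l, (i < N)%nat -> (l < B)%nat ->
      phi (S t) i l = fsum N (fun j => a l t i j * phi t j l))
  (Hx : forall t i l k, (i < N)%nat -> (l < B)%nat -> (k < d)%nat ->
      x (S t) i l k = fsum N (fun j => a l t i j * phi t j l / phi (S t) i l *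
                        (x t j l k + gamma t * dx sel xt x t j l k)))
  (Hy : forall t i l k, (i < N)%nat -> (l < B)%nat -> (k < d)%nat ->
      y (S t) i l k = fsum N (fun j => a l t i j / phi (S t) i l *
                        (phi t j l * y t j l k + gf j (x (S t) j) l k - gf j (x t j) l k)))
  : forall i, (i < N)%nat ->
      Un_cv (fun t => track_err N B d gf x y t i) 0 /\
      exists s, infinite_sum (fun t => gamma t * track_err N B d gf x y t i) s.
Proof.
  intros i Hi.
  destruct (mprod_window_uniform N B E sel kappa a HN HE_nodes HE_sc HE_loop Hsel_cyc Hkappa Ha_pos Ha_zero)
    as [W [HW Hwin]].
  destruct (exists_uniform_R (fun j M => forall z, inK B K z -> normx B d (gf j z) <= M) N) as [Mg HMg].
  { intros j M M' H HM z Hz. specialize (H z Hz). lra. }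
  { exact Hf_bd. }
  destruct (exists_uniform_R (fun j L => 0 <= L /\ forall z w, inK B K z -> inK B K w ->
      normx B d (subx (gf j z) (gf j w)) <= L * normx B d (subx z w)) N) as [L HL].
  { intros j M M' [HM0 H] HM. split; [lra|]. intros z w Hz Hw. specialize (H z w Hz Hw).
    pose proof (normx_ge0 B d (subx z w)). nra. }
  { intros j Hj. destruct (Hf_Lip j Hj) as [L HL]. exists (Rmax L 0). split; [apply Rmax_r|].
    intros z w Hz Hw. eapply Rle_trans; [apply HL; auto|].
    apply Rmult_le_compat_r; [apply normx_ge0|apply Rmax_l]. }
  destruct (exists_uniform_R (fun l M => forall z g, K l z -> is_subgrad d (r l) g z -> normd d g <= M) B)
    as [Mr HMr].
  { intros l M M' H HM z g Hz Hg. specialize (H z g Hz Hg). lra. }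
  { exact Hr_bd. }
  destruct (exists_pos_lower_bound tau N) as [tm [Htm0 Htm]]; [intros; now apply Rgt_lt, Htau|].
  apply (tracking_error_vanishes N B d K gf r E sel kappa a ft gft tau gamma x y phi xt
    HN HKcl HKcv Hr_cvx HE_loop Hsel_rng Hkappa Ha_pos Ha_zero Ha_col Htau Hft_C1 Hft_sc Hft_cons
    Hg_pos Hg_dec Hg_sq Hx0 Hy0 Hphi0 Hxt_K Hxt_min Hphi Hx Hy HB Hd W HW Hwin Mg L Mr tm); auto.
  - apply (HL 0%nat). lia.
  - intros j z w Hj. now apply HL.
  - intros l z g Hl. now apply HMr.
Qed.
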